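(* Let $s\in\{+1,-1\}$, $\alpha\ge\beta\ge-\tfrac12$, $m\ge1$, and let $x_1$ be the largest zero of $p^{(\alpha+1,\beta)}_m$. Let $f\in\mathcal B_s(I;\alpha,\beta)\setminus\{0\}$ be a polynomial of degree at most $2m$, and if $s=+1$ assume also $f(1)=0$. Then $r(f;I)\ge1-x_1$, with equality if and only if $f$ is a positive multiple of $P(x)=(1-x)\,\frac{p^{(\alpha+1,\beta)}_m(x)^2}{x_1-x}$.
   Context: $I=[-1,1]$; $w_{\alpha,\beta}(x)=c_{\alpha,\beta}(1-x)^\alpha(1+x)^\beta$ on $I$ normalized to a probability density; $P^{(\alpha,\beta)}_n$ Jacobi polynomials (orthogonal for $w_{\alpha,\beta}$, $P^{(\alpha,\beta)}_n(1)=\binom{n+\alpha}{n}$), $p^{(\alpha,\beta)}_n$ their $L^2(w_{\alpha,\beta})$-normalizations; $\widehat f(n)=\int_I f\,p^{(\alpha,\beta)}_nw_{\alpha,\beta}dx$. $\mathcal B_s(I;\alpha,\beta)$: continuous real $f$ on $I$ with $\widehat f(0)\le0$, $\{s\widehat f(n)\}$ eventually nonnegative, $sf(1)\le0$. $r(f;I)=\inf\{r\in(0,2]: f(x)\ge0\text{ for }x\in[-1,1-r)\}$. *)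

From Stdlib Require Import Reals Lra Arith ClassicalEpsilon ClassicalDescription.
Open Scope R_scope.

Definition inI (x : R) : Prop := -1 <= x <= 1.

(* Improper integral over (-1,1): limit of Riemann integrals over [a,b]
   as a -> -1+ and b -> 1- (needed since the weights may be unbounded
   at the endpoints when alpha or beta is negative). *)
Definition has_Iint (g : R -> R) (l : R) : Prop :=
  forall eps, 0 < eps -> exists delta, 0 < delta /\
    forall a b, -1 < a < -1 + delta -> 1 - delta < b < 1 ->
      exists pr : Riemann_integrable g a b, Rabs (RiemannInt pr - l) < eps.

Definition Iint (g : R -> R) : R :=
  match excluded_middle_informative (exists l, has_Iint g l) with
  | left H => proj1_sig (constructive_indefinite_description _ H)
  | right _ => 0
  end.

Definition wJ (a b : R) (x : R) : R := Rpower (1 - x) a * Rpower (1 + x) b.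

Definition wprob (a b : R) (x : R) : R := wJ a b x / Iint (wJ a b).

Definition inner (a b : R) (f g : R -> R) : R :=
  Iint (fun x => f x * g x * wprob a b x).

Fixpoint fallfac (z : R) (j : nat) : R :=
  match j with
  | O => 1
  | S j' => fallfac z j' * (z - INR j')
  end.
Definition gbinom (z : R) (j : nat) : R := fallfac z j / INR (Factorial.fact j).

(* Jacobi polynomial P_n^{(a,b)} (classical normalization,
   P_n^{(a,b)}(1) = binom(n+a, n)). *)
Definition jacobiP (a b : R) (n : nat) (x : R) : R :=
  sum_f_R0 (fun k => gbinom (INR n + a) (n - k) * gbinom (INR n + b) k
                      * ((x - 1) / 2) ^ k * ((x + 1) / 2) ^ (n - k)) n.

Definition jacobi_p (a b : R) (n : nat) (x : R) : R :=
  jacobiP a b n x / sqrt (inner a b (jacobiP a b n) (jacobiP a b n)).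

Definition jcoef (a b : R) (f : R -> R) (n : nat) : R :=
  inner a b f (jacobi_p a b n).

Definition cont_on_I (f : R -> R) : Prop :=
  forall x, inI x -> limit1_in f inI (f x) x.

Definition in_B (s a b : R) (f : R -> R) : Prop :=
  cont_on_I f /\
  jcoef a b f 0 <= 0 /\
  (exists N : nat, forall n : nat, (N <= n)%nat -> 0 <= s * jcoef a b f n) /\
  s * f 1 <= 0.

Definition is_poly_deg_le (f : R -> R) (d : nat) : Prop :=
  exists c : nat -> R, forall x, f x = sum_f_R0 (fun k => c k * x ^ k) d.

Definition is_glb (E : R -> Prop) (m : R) : Prop :=
  (forall x, E x -> m <= x) /\ (forall b', (forall x, E x -> b' <= x) -> b' <= m).

Definition r_set (f : R -> R) (r : R) : Prop :=
  0 < r <= 2 /\ forall x, -1 <= x < 1 - r -> 0 <= f x.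

Definition r_I (f : R -> R) : R :=
  match excluded_middle_informative (exists m, is_glb (r_set f) m) with
  | left H => proj1_sig (constructive_indefinite_description _ H)
  | right _ => 0
  end.

(* The zeros $y_1 < \dots < y_m$ of $p^{(\alpha+1,\beta)}_m$, all simple and in $(-1,1)$,
   together with the endpoint $1$ are the nodes of a Gauss-Radau quadrature for
   $w_{\alpha,\beta}$ which has positive weights and is exact on polynomials of degree
   at most $2m$.  Exactness reduces, through $w_{\alpha+1,\beta} = (1-x)\,w_{\alpha,\beta}$,
   to the orthogonality of $P^{(\alpha+1,\beta)}_m$ to polynomials of degree $< m$, which
   follows from Rodrigues' formula by repeated integration by parts.

   If $r(f) \le 1 - x_1$, then $f \ge 0$ on $[-1, x_1]$ and $f(1) \ge 0$, whereas
   $\widehat f(0) \le 0$ says that the quadrature sum is $\le 0$; so $f$ vanishes at every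
   node.  At an interior node $y$ left of $1 - r(f)$ the sign condition turns this zero
   into a double one.  When $r(f) < 1 - x_1$ this produces $2m + 1$ zeros counted with
   multiplicity, so $f = 0$; when $r(f) = 1 - x_1$ it determines $f$ up to a factor,
   which must be positive since $f(-1) \ge 0$. *)

From Stdlib Require Import Reals Lra Lia List Classical ClassicalEpsilon.
From Stdlib Require FinFun.
From Coquelicot Require Import Coquelicot.
Open Scope R_scope.

Lemma is_derive_Rconst (c x : R) : is_derive (fun _ : R => c) x 0.
Proof. exact (is_derive_const c x). Qed.

Lemma is_derive_Rid (x : R) : is_derive (fun y : R => y) x 1.
Proof. exact (is_derive_id x). Qed.

Lemma is_derive_Rplus (f g : R -> R) (x df dg : R) :
  is_derive f x df -> is_derive g x dg -> is_derive (fun y => f y + g y) x (df + dg).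
Proof. exact (is_derive_plus f g x df dg). Qed.

Lemma is_derive_val_eq (f : R -> R) (x d d' : R) : d = d' -> is_derive f x d -> is_derive f x d'.
Proof. now intros <-. Qed.

Lemma is_derive_sum_f_R0 (F dF : nat -> R -> R) n x :
  (forall i, (i <= n)%nat -> is_derive (F i) x (dF i x)) ->
  is_derive (fun y => sum_f_R0 (fun i => F i y) n) x (sum_f_R0 (fun i => dF i x) n).
Proof.
  induction n as [|n IH]; intro H; simpl.
  - apply H; auto.
  - apply (is_derive_Rplus (fun y => sum_f_R0 (fun i => F i y) n) (F (S n))).
    + apply IH; intros; apply H; lia.
    + apply H; lia.
Qed.

(** * Polynomials of bounded degree *)

Lemma poly_deg_0_iff g : is_poly_deg_le g 0 <-> exists c, forall x, g x = c.
Proof.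
  split.
  - intros [c Hc]. exists (c 0%nat). intro x. rewrite Hc. simpl. ring.
  - intros [c Hc]. exists (fun _ => c). intro x. rewrite Hc. simpl. ring.
Qed.

Lemma poly_deg_S_iff d g :
  is_poly_deg_le g (S d) <->
  exists c0 g1, is_poly_deg_le g1 d /\ forall x, g x = c0 + x * g1 x.
Proof.
  split.
  - intros [c Hc]. exists (c 0%nat), (fun x => sum_f_R0 (fun k => c (S k) * x ^ k) d).
    split. { exists (fun k => c (S k)). reflexivity. }
    intro x. rewrite Hc, (decomp_sum _ (S d)) by lia. simpl pred.
    rewrite scal_sum. simpl. f_equal; [ring|]. apply sum_eq. intros i _. simpl. ring.
  - intros [c0 [g1 [[c Hc] Hg]]].
    exists (fun k => match k with O => c0 | S k' => c k' end).
    intro x. rewrite Hg, Hc, (decomp_sum _ (S d)) by lia. simpl pred.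
    rewrite scal_sum. simpl. f_equal; [ring|]. apply sum_eq. intros i _. simpl. ring.
Qed.

Lemma poly_ext d f g : (forall x, f x = g x) -> is_poly_deg_le f d -> is_poly_deg_le g d.
Proof. intros H [c Hc]. exists c. intro x. rewrite <- H. apply Hc. Qed.

Lemma poly_const d c : is_poly_deg_le (fun _ => c) d.
Proof.
  exists (fun k => match k with O => c | S _ => 0 end). intro x.
  induction d as [|d IH]; simpl; [ring|]. rewrite <- IH. ring.
Qed.

Lemma poly_deg_mono d d' f : (d <= d')%nat -> is_poly_deg_le f d -> is_poly_deg_le f d'.
Proof.
  revert d' f. induction d as [|d IH]; intros d' f Hle H.
  - apply poly_deg_0_iff in H as [c Hc].
    apply (poly_ext _ (fun _ => c)); [intro; auto|apply poly_const].
  - destruct d' as [|d']; [lia|]. apply poly_deg_S_iff in H as [c0 [g1 [H1 H2]]].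
    apply poly_deg_S_iff. exists c0, g1. split; auto. apply IH; auto; lia.
Qed.

Lemma poly_add d f g :
  is_poly_deg_le f d -> is_poly_deg_le g d -> is_poly_deg_le (fun x => f x + g x) d.
Proof.
  intros [cf Hf] [cg Hg]. exists (fun k => cf k + cg k). intro x.
  rewrite Hf, Hg, <- plus_sum. apply sum_eq. intros; ring.
Qed.

Lemma poly_scal d k f : is_poly_deg_le f d -> is_poly_deg_le (fun x => k * f x) d.
Proof.
  intros [c Hc]. exists (fun i => k * c i). intro x. rewrite Hc, scal_sum.
  apply sum_eq. intros; ring.
Qed.

Lemma poly_sub d f g :
  is_poly_deg_le f d -> is_poly_deg_le g d -> is_poly_deg_le (fun x => f x - g x) d.
Proof.
  intros Hf Hg. apply (poly_ext _ (fun x => f x + -1 * g x)); [intro; ring|].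
  apply poly_add; auto. apply poly_scal; auto.
Qed.

Lemma poly_mul d1 d2 f g :
  is_poly_deg_le f d1 -> is_poly_deg_le g d2 -> is_poly_deg_le (fun x => f x * g x) (d1 + d2).
Proof.
  revert g. induction d2 as [|d2 IH]; intros g Hf Hg.
  - apply poly_deg_0_iff in Hg as [c Hc]. rewrite Nat.add_0_r.
    apply (poly_ext _ (fun x => c * f x)); [intro; rewrite Hc; ring|]. apply poly_scal; auto.
  - apply poly_deg_S_iff in Hg as [c0 [g1 [Hg1 Hc]]].
    apply (poly_ext _ (fun x => c0 * f x + x * (f x * g1 x))); [intro x; rewrite Hc; ring|].
    apply poly_add.
    + apply poly_deg_mono with d1; [lia|]. apply poly_scal; auto.
    + rewrite Nat.add_succ_r. apply poly_deg_S_iff. exists 0, (fun x => f x * g1 x).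
      split; [apply IH; auto|intro; ring].
Qed.

Lemma poly_sum_f_R0 d n (F : nat -> R -> R) :
  (forall k, (k <= n)%nat -> is_poly_deg_le (F k) d) ->
  is_poly_deg_le (fun x => sum_f_R0 (fun k => F k x) n) d.
Proof.
  induction n as [|n IH]; intro H; simpl.
  - apply H; auto.
  - apply poly_add; [apply IH; intros; apply H|apply H]; lia.
Qed.

Lemma poly_affine u v : is_poly_deg_le (fun x => u * x + v) 1.
Proof. apply poly_deg_S_iff. exists v, (fun _ => u). split; [apply poly_const|intro; ring]. Qed.

Lemma poly_pow d k f : is_poly_deg_le f d -> is_poly_deg_le (fun x => f x ^ k) (k * d).
Proof. intro H. induction k; simpl; [apply poly_const|apply poly_mul; auto]. Qed.

Lemma poly_factor_root d f r :
  is_poly_deg_le f d -> f r = 0 ->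
  exists h, is_poly_deg_le h (d - 1) /\ forall x, f x = (x - r) * h x.
Proof.
  revert f. induction d as [|d IH]; intros f Hf Hr.
  - apply poly_deg_0_iff in Hf as [c Hc]. exists (fun _ => 0). split; [apply poly_const|].
    intro x. rewrite Hc. rewrite Hc in Hr. rewrite Hr. ring.
  - apply poly_deg_S_iff in Hf as [c0 [g1 [Hg1 Hc]]].
    destruct (IH (fun x => g1 x - g1 r)) as [k [Hk Hk2]].
    { apply poly_sub; auto. apply poly_const. } { ring. }
    exists (fun x => g1 x + r * k x). split.
    + simpl. rewrite Nat.sub_0_r. apply poly_add; auto.
      apply poly_scal. apply poly_deg_mono with (d - 1)%nat; auto; lia.
    + intro x. rewrite Hc. rewrite Hc in Hr.
      assert (E : g1 x = g1 r + (x - r) * k x) by (rewrite <- Hk2; ring).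
      rewrite E. replace c0 with (- r * g1 r) by lra. ring.
Qed.

Fixpoint prod_roots (l : list R) (x : R) : R :=
  match l with nil => 1 | r :: l' => (x - r) * prod_roots l' x end.

Lemma poly_prod_roots l : is_poly_deg_le (prod_roots l) (length l).
Proof.
  induction l as [|r l IH]; simpl; [apply poly_const|].
  apply (poly_ext _ (fun x => (1 * x + - r) * prod_roots l x)); [intro; ring|].
  apply (poly_mul 1); auto. apply poly_affine.
Qed.

Lemma prod_roots_eq0 l x : In x l -> prod_roots l x = 0.
Proof.
  induction l as [|r l IH]; simpl; intros H; [contradiction|].
  destruct H as [<-|H]; [ring|rewrite IH; auto; ring].
Qed.

Lemma prod_roots_neq0 l x : ~ In x l -> prod_roots l x <> 0.
Proof.
  induction l as [|r l IH]; simpl; intros H; [lra|].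
  apply Rmult_integral_contrapositive. split.
  - intro; apply H; left; lra.
  - apply IH. intro; apply H; right; auto.
Qed.

Lemma prod_roots_remove z l : NoDup l -> In z l ->
  forall x, prod_roots l x = (x - z) * prod_roots (remove Req_EM_T z l) x.
Proof.
  induction l as [|r l IH]; intros Hnd Hin x; simpl in *; [contradiction|].
  inversion Hnd; subst. destruct (Req_EM_T z r) as [<-|Hne].
  - rewrite notin_remove; auto.
  - destruct Hin as [->|Hin]; [contradiction|]. simpl. rewrite (IH H2 Hin x). ring.
Qed.

Lemma NoDup_remove_R z l : NoDup l -> NoDup (remove Req_EM_T z l).
Proof.
  induction l as [|r l IH]; intro H; simpl; [constructor|]. inversion H; subst.
  destruct (Req_EM_T z r); [apply IH; auto|].
  constructor; [|apply IH; auto]. intro Hin. apply in_remove in Hin. tauto.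
Qed.

Lemma length_remove_R z l : NoDup l -> In z l -> S (length (remove Req_EM_T z l)) = length l.
Proof.
  induction l as [|r l IH]; intros Hnd Hin; simpl in *; [contradiction|]. inversion Hnd; subst.
  destruct (Req_EM_T z r) as [<-|Hne].
  - rewrite notin_remove; auto.
  - destruct Hin as [->|Hin]; [contradiction|]. simpl. f_equal. apply IH; auto.
Qed.

Lemma poly_factor_roots rs : forall d f, is_poly_deg_le f d -> NoDup rs ->
  (forall r, In r rs -> f r = 0) ->
  exists h, is_poly_deg_le h (d - length rs) /\ forall x, f x = prod_roots rs x * h x.
Proof.
  induction rs as [|r0 rs IH]; intros d f Hf Hnd Hr; simpl.
  - exists f. rewrite Nat.sub_0_r. split; auto. intro; ring.
  - destruct (poly_factor_root _ _ r0 Hf) as [h0 [Hh0 Hfh]]; [apply Hr; left; auto|].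
    inversion Hnd; subst.
    destruct (IH (d - 1)%nat h0) as [h [Hh Hh2]]; auto.
    + intros r Hin. assert (E : f r = 0) by (apply Hr; right; auto). rewrite Hfh in E.
      apply Rmult_integral in E as [E|E]; auto.
      replace r with r0 in Hin by lra. contradiction.
    + exists h. split.
      * replace (d - S (length rs))%nat with (d - 1 - length rs)%nat by lia. auto.
      * intro x. rewrite Hfh, Hh2. ring.
Qed.

Lemma poly_eq0_of_roots rs : forall d f, is_poly_deg_le f d -> NoDup rs ->
  (forall r, In r rs -> f r = 0) -> (d < length rs)%nat -> forall x, f x = 0.
Proof.
  induction rs as [|r0 rs IH]; intros d f Hf Hnd Hr Hl x; simpl in Hl; [lia|].
  destruct d as [|d].
  - apply poly_deg_0_iff in Hf as [c Hc]. rewrite Hc, <- (Hc r0). apply Hr; left; auto.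
  - destruct (poly_factor_root _ _ r0 Hf) as [h [Hh Hfh]]; [apply Hr; left; auto|].
    simpl in Hh. rewrite Nat.sub_0_r in Hh. inversion Hnd; subst.
    rewrite Hfh, (IH d h); auto; [ring| |lia].
    intros r Hin. assert (E : f r = 0) by (apply Hr; right; auto). rewrite Hfh in E.
    apply Rmult_integral in E as [E|E]; auto.
    replace r with r0 in Hin by lra. contradiction.
Qed.

Lemma poly_continuous d f : is_poly_deg_le f d -> forall x, continuous f x.
Proof.
  revert f. induction d as [|d IH]; intros f Hf x.
  - apply poly_deg_0_iff in Hf as [c Hc].
    apply (continuous_ext (fun _ => c)); [intro; auto|apply continuous_const].
  - apply poly_deg_S_iff in Hf as [c0 [g1 [Hg1 Hc]]].
    apply (continuous_ext (fun y => c0 + y * g1 y)); [intro; auto|].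
    apply (continuous_plus (fun _ => c0) (fun y => y * g1 y)); [apply continuous_const|].
    apply (continuous_mult (fun y => y) g1); [apply continuous_id|apply IH; auto].
Qed.

Lemma poly_bounded_on_I d f : is_poly_deg_le f d ->
  exists M, forall x, -1 <= x <= 1 -> Rabs (f x) <= M.
Proof.
  revert f. induction d as [|d IH]; intros f Hf.
  - apply poly_deg_0_iff in Hf as [c Hc]. exists (Rabs c). intros. rewrite Hc; lra.
  - apply poly_deg_S_iff in Hf as [c0 [g1 [Hg1 Hc]]].
    destruct (IH g1 Hg1) as [M HM]. exists (Rabs c0 + Rabs M). intros x Hx.
    rewrite Hc. eapply Rle_trans; [apply Rabs_triang|]. apply Rplus_le_compat_l.
    rewrite Rabs_mult. specialize (HM x Hx).
    assert (Rabs x <= 1) by (apply Rabs_le; lra).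
    pose proof (Rabs_pos (g1 x)). pose proof (RRle_abs M).
    apply Rle_trans with (1 * Rabs (g1 x)); [apply Rmult_le_compat_r|]; lra.
Qed.

Lemma poly_derive d f : is_poly_deg_le f d ->
  exists f', is_poly_deg_le f' (d - 1) /\ forall x, is_derive f x (f' x).
Proof.
  revert f. induction d as [|d IH]; intros f Hf.
  - apply poly_deg_0_iff in Hf as [c Hc]. exists (fun _ => 0). split; [apply poly_const|].
    intro x. apply (is_derive_ext (fun _ => c)); [intro; auto|apply is_derive_Rconst].
  - apply poly_deg_S_iff in Hf as [c0 [g1 [Hg1 Hc]]].
    destruct (IH g1 Hg1) as [g1' [Hg1' Hd]].
    exists (fun x => g1 x + x * g1' x). split.
    + simpl. rewrite Nat.sub_0_r. destruct d as [|d].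
      * apply poly_deg_0_iff in Hg1 as [k Hk].
        assert (Hz : forall x, g1' x = 0).
        { intro x. rewrite <- (is_derive_unique _ _ _ (Hd x)).
          rewrite (Derive_ext _ (fun _ => k)); [apply Derive_const|auto]. }
        apply poly_deg_0_iff. exists k. intro; rewrite Hz, Hk; ring.
      * apply poly_add; auto. apply poly_deg_S_iff. exists 0, g1'.
        simpl in Hg1'. rewrite Nat.sub_0_r in Hg1'. split; auto. intro; ring.
    + intro x. apply (is_derive_ext (fun y => c0 + y * g1 y)); [intro; auto|].
      eapply is_derive_val_eq; [|apply is_derive_Rplus; [apply is_derive_Rconst|]].
      2: apply (Derive.is_derive_mult (fun y => y) g1); [apply is_derive_Rid|apply Hd].
      simpl. ring.
Qed.

Lemma poly_derive_tower n : forall g, is_poly_deg_le g n ->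
  exists D : nat -> R -> R,
    (forall x, D 0%nat x = g x) /\ (forall i x, is_derive (D i) x (D (S i) x)) /\
    (forall x, D (S n) x = 0) /\ (forall i, is_poly_deg_le (D i) n).
Proof.
  induction n as [|n IH]; intros g Hg.
  - pose proof Hg as Hg0. apply poly_deg_0_iff in Hg as [c Hc].
    exists (fun i => match i with O => g | S _ => fun _ => 0 end).
    split; [auto|split; [|split; [auto|]]].
    + intros [|i] x; [|apply is_derive_Rconst].
      apply (is_derive_ext (fun _ => c)); [intro; auto|apply is_derive_Rconst].
    + intros [|i]; [auto|apply poly_const].
  - destruct (poly_derive _ _ Hg) as [g' [Hg' Hd]]. simpl in Hg'. rewrite Nat.sub_0_r in Hg'.
    destruct (IH g' Hg') as [D [H0 [H1 [H2 H3]]]].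
    exists (fun i => match i with O => g | S i' => D i' end).
    split; [auto|split; [|split; [auto|]]].
    + intros [|i] x; [rewrite H0; auto|apply H1].
    + intros [|i]; [auto|apply poly_deg_mono with n; auto].
Qed.

Lemma Rpower_gt0 t e : 0 < Rpower t e.
Proof. apply exp_pos. Qed.

Lemma Rpower_plus_INR t e n : 0 < t -> Rpower t (e + INR n) = Rpower t e * t ^ n.
Proof. intro. rewrite Rpower_plus, Rpower_pow; auto. Qed.

Lemma is_derive_Rpower_one_minus e x : x < 1 ->
  is_derive (fun y => Rpower (1 - y) e) x (- (e * Rpower (1 - x) (e - 1))).
Proof.
  intro Hx. apply is_derive_Reals.
  replace (- (e * Rpower (1 - x) (e - 1))) with ((e * Rpower (1 - x) (e - 1)) * (-1)) by ring.
  apply (derivable_pt_lim_comp (fun y => 1 - y) (fun t => Rpower t e)).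
  - apply is_derive_Reals. eapply is_derive_val_eq.
    2: apply (is_derive_minus (fun _ => 1) (fun y => y)); [apply is_derive_Rconst|apply is_derive_Rid].
    unfold minus, plus, opp; simpl. ring.
  - apply derivable_pt_lim_power. lra.
Qed.

Lemma is_derive_Rpower_one_plus e x : -1 < x ->
  is_derive (fun y => Rpower (1 + y) e) x (e * Rpower (1 + x) (e - 1)).
Proof.
  intro Hx. apply is_derive_Reals.
  replace (e * Rpower (1 + x) (e - 1)) with ((e * Rpower (1 + x) (e - 1)) * 1) by ring.
  apply (derivable_pt_lim_comp (fun y => 1 + y) (fun t => Rpower t e)).
  - apply is_derive_Reals. eapply is_derive_val_eq.
    2: apply is_derive_Rplus; [apply is_derive_Rconst|apply is_derive_Rid]. ring.
  - apply derivable_pt_lim_power. lra.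
Qed.

Lemma continuous_Rpower_one_minus e x : x < 1 -> continuous (fun y => Rpower (1 - y) e) x.
Proof.
  intro. apply (ex_derive_continuous (fun y => Rpower (1 - y) e)).
  eexists. apply is_derive_Rpower_one_minus; auto.
Qed.

Lemma continuous_Rpower_one_plus e x : -1 < x -> continuous (fun y => Rpower (1 + y) e) x.
Proof.
  intro. apply (ex_derive_continuous (fun y => Rpower (1 + y) e)).
  eexists. apply is_derive_Rpower_one_plus; auto.
Qed.

Lemma Rpower_small_near_0 e : 0 < e -> forall eps, 0 < eps ->
  exists del, 0 < del /\ forall t, 0 < t < del -> Rpower t e < eps.
Proof.
  intros He eps Heps. exists (Rpower eps (/ e)). split; [apply Rpower_gt0|].
  intros t Ht. replace eps with (Rpower (Rpower eps (/ e)) e).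
  - apply Rlt_Rpower_l; auto; lra.
  - rewrite Rpower_mult. replace (/ e * e) with 1 by (field; lra). apply Rpower_1; auto.
Qed.

Lemma Rpower_le_2_abs t e : 1 <= t <= 2 -> Rpower t e <= Rpower 2 (Rabs e).
Proof.
  intros Ht. apply Rle_trans with (Rpower t (Rabs e)).
  - apply Rle_Rpower; [lra|apply RRle_abs].
  - apply Rle_Rpower_l; [apply Rabs_pos|lra].
Qed.

(** * Improper integrals over (-1,1) *)

Definition continuous_inside (h : R -> R) := forall x, -1 < x < 1 -> continuous h x.

Definition is_Iint (g : R -> R) (l : R) : Prop :=
  (forall u v, -1 < u -> u <= v -> v < 1 -> ex_RInt g u v) /\
  forall eps, 0 < eps -> exists del, 0 < del /\
    forall u v, -1 < u < -1 + del -> 1 - del < v < 1 -> Rabs (RInt g u v - l) < eps.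

Lemma is_Iint_has_Iint g l : is_Iint g l -> has_Iint g l.
Proof.
  intros [Hex Hlim] eps Heps. destruct (Hlim eps Heps) as [del [Hdel H]].
  exists (Rmin del 1). split; [apply Rmin_pos; lra|].
  intros u v Hu Hv. pose proof (Rmin_l del 1). pose proof (Rmin_r del 1).
  assert (Hi : ex_RInt g u v) by (apply Hex; lra).
  exists (ex_RInt_Reals_0 _ _ _ Hi). rewrite <- RInt_Reals. apply H; lra.
Qed.

Lemma has_Iint_unique g l1 l2 : has_Iint g l1 -> has_Iint g l2 -> l1 = l2.
Proof.
  assert (W : forall p q, has_Iint g p -> has_Iint g q -> ~ p < q).
  { intros p q H1 H2 Hlt. set (eps := (q - p) / 2).
    destruct (H1 eps) as [d1 [Hd1 K1]]; [unfold eps; lra|].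
    destruct (H2 eps) as [d2 [Hd2 K2]]; [unfold eps; lra|].
    set (d := Rmin d1 d2). assert (0 < d) by (apply Rmin_pos; auto).
    assert (d <= d1) by apply Rmin_l. assert (d <= d2) by apply Rmin_r.
    destruct (K1 (-1 + d / 2) (1 - d / 2)) as [p1 E1]; [lra|lra|].
    destruct (K2 (-1 + d / 2) (1 - d / 2)) as [p2 E2]; [lra|lra|].
    rewrite (RiemannInt_P5 p1 p2) in E1.
    apply Rabs_def2 in E1. apply Rabs_def2 in E2. unfold eps in *. lra. }
  intros H1 H2. destruct (Rtotal_order l1 l2) as [H|[H|H]]; auto.
  - exfalso. apply (W l1 l2); auto.
  - exfalso. apply (W l2 l1); auto.
Qed.

Lemma Iint_eq g l : is_Iint g l -> Iint g = l.
Proof.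
  intro H. apply is_Iint_has_Iint in H. unfold Iint.
  destruct ClassicalDescription.excluded_middle_informative as [E|E].
  - destruct (constructive_indefinite_description _ E) as [l' Hl']. simpl.
    eapply has_Iint_unique; eauto.
  - exfalso. apply E. eauto.
Qed.

Lemma is_Iint_plus g1 g2 l1 l2 :
  is_Iint g1 l1 -> is_Iint g2 l2 -> is_Iint (fun x => g1 x + g2 x) (l1 + l2).
Proof.
  intros [E1 L1] [E2 L2]. split.
  - intros. apply (ex_RInt_plus g1 g2); auto.
  - intros eps Heps. destruct (L1 (eps / 2)) as [d1 [Hd1 K1]]; [lra|].
    destruct (L2 (eps / 2)) as [d2 [Hd2 K2]]; [lra|].
    exists (Rmin (Rmin d1 d2) 1). split; [repeat apply Rmin_pos; lra|].
    intros u v Hu Hv.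
    pose proof (Rmin_l (Rmin d1 d2) 1). pose proof (Rmin_r (Rmin d1 d2) 1).
    pose proof (Rmin_l d1 d2). pose proof (Rmin_r d1 d2).
    pose proof (RInt_plus g1 g2 u v ltac:(apply E1; lra) ltac:(apply E2; lra)) as HP.
    change plus with Rplus in HP. simpl in HP. rewrite HP.
    specialize (K1 u v ltac:(lra) ltac:(lra)). specialize (K2 u v ltac:(lra) ltac:(lra)).
    apply Rabs_def2 in K1. apply Rabs_def2 in K2. apply Rabs_def1; simpl; lra.
Qed.

Lemma is_Iint_scal k g l : is_Iint g l -> is_Iint (fun x => k * g x) (k * l).
Proof.
  intros [E1 L1]. split.
  - intros. apply (ex_RInt_scal g); auto.
  - intros eps Heps. destruct (L1 (eps / (Rabs k + 1))) as [d1 [Hd1 K1]].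
    { apply Rdiv_lt_0_compat; auto. pose proof (Rabs_pos k); lra. }
    exists (Rmin d1 1). split; [apply Rmin_pos; lra|].
    intros u v Hu Hv. pose proof (Rmin_l d1 1). pose proof (Rmin_r d1 1).
    pose proof (RInt_scal g u v k ltac:(apply E1; lra)) as HP.
    change scal with Rmult in HP. simpl in HP. unfold mult in HP; simpl in HP. rewrite HP.
    specialize (K1 u v ltac:(lra) ltac:(lra)).
    replace (k * RInt g u v - k * l) with (k * (RInt g u v - l)) by ring.
    rewrite Rabs_mult. pose proof (Rabs_pos k). pose proof (Rabs_pos (RInt g u v - l)).
    apply Rle_lt_trans with ((Rabs k + 1) * Rabs (RInt g u v - l)); [nra|].
    apply Rmult_lt_reg_l with (/ (Rabs k + 1)); [apply Rinv_0_lt_compat; lra|].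
    rewrite <- Rmult_assoc, Rinv_l by lra. lra.
Qed.

Lemma is_Iint_ext g1 g2 l :
  (forall x, -1 < x < 1 -> g1 x = g2 x) -> is_Iint g1 l -> is_Iint g2 l.
Proof.
  intros He [E1 L1]. split.
  - intros u v Hu Huv Hv. apply (ex_RInt_ext g1); [|apply E1; auto].
    intros x Hx. rewrite Rmin_left in Hx by lra. rewrite Rmax_right in Hx by lra. apply He; lra.
  - intros eps Heps. destruct (L1 eps Heps) as [d1 [Hd1 K1]].
    exists (Rmin d1 1). split; [apply Rmin_pos; lra|].
    intros u v Hu Hv. pose proof (Rmin_l d1 1). pose proof (Rmin_r d1 1).
    rewrite <- (RInt_ext g1); [apply K1; lra|].
    intros x Hx. rewrite Rmin_left in Hx by lra. rewrite Rmax_right in Hx by lra. apply He; lra.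
Qed.

Lemma is_Iint_minus g1 g2 l1 l2 :
  is_Iint g1 l1 -> is_Iint g2 l2 -> is_Iint (fun x => g1 x - g2 x) (l1 - l2).
Proof.
  intros H1 H2. replace (l1 - l2) with (l1 + -1 * l2) by ring.
  eapply is_Iint_ext; [|apply (is_Iint_plus _ _ _ _ H1 (is_Iint_scal (-1) _ _ H2))].
  intros; simpl; ring.
Qed.

Lemma ex_RInt_inside h u v : continuous_inside h -> -1 < u -> u <= v -> v < 1 -> ex_RInt h u v.
Proof.
  intros Hc Hu Huv Hv. apply (@ex_RInt_continuous R_CompleteNormedModule h). intros z Hz.
  rewrite Rmin_left in Hz by lra. rewrite Rmax_right in Hz by lra. apply Hc; lra.
Qed.

Lemma RInt_le_nonneg_wider h u u0 v0 v :
  continuous_inside h -> (forall x, -1 < x < 1 -> 0 <= h x) ->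
  -1 < u -> u <= u0 -> u0 <= v0 -> v0 <= v -> v < 1 -> RInt h u0 v0 <= RInt h u v.
Proof.
  intros Hc Hp Hu H1 H2 H3 Hv.
  assert (E1 : ex_RInt h u u0) by (apply ex_RInt_inside; auto; lra).
  assert (E2 : ex_RInt h u0 v0) by (apply ex_RInt_inside; auto; lra).
  assert (E3 : ex_RInt h v0 v) by (apply ex_RInt_inside; auto; lra).
  assert (0 <= RInt h u u0) by (apply RInt_ge_0; auto; intros; apply Hp; lra).
  assert (0 <= RInt h v0 v) by (apply RInt_ge_0; auto; intros; apply Hp; lra).
  rewrite <- (RInt_Chasles h u v0 v), <- (RInt_Chasles h u u0 v0); auto.
  - change plus with Rplus. lra.
  - apply ex_RInt_inside; auto; lra.
Qed.

Lemma is_Iint_ge_RInt h l u0 v0 :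
  is_Iint h l -> continuous_inside h -> (forall x, -1 < x < 1 -> 0 <= h x) ->
  -1 < u0 -> u0 <= v0 -> v0 < 1 -> RInt h u0 v0 <= l.
Proof.
  intros [Ex L] Hc Hp Hu0 Huv Hv0. apply Rnot_lt_le. intro Hlt.
  destruct (L (RInt h u0 v0 - l)) as [del [Hdel K]]; [lra|].
  set (d := Rmin del (Rmin (u0 + 1) (1 - v0))).
  assert (0 < d) by (repeat apply Rmin_pos; lra).
  assert (d <= del) by apply Rmin_l.
  assert (d <= Rmin (u0 + 1) (1 - v0)) by apply Rmin_r.
  pose proof (Rmin_l (u0 + 1) (1 - v0)). pose proof (Rmin_r (u0 + 1) (1 - v0)).
  specialize (K (-1 + d / 2) (1 - d / 2) ltac:(lra) ltac:(lra)).
  pose proof (RInt_le_nonneg_wider h (-1 + d / 2) u0 v0 (1 - d / 2) Hc Hp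
                ltac:(lra) ltac:(lra) Huv ltac:(lra) ltac:(lra)).
  apply Rabs_def2 in K. lra.
Qed.

Lemma continuous_eps_delta h x : continuous h x -> forall eps, 0 < eps ->
  exists del, 0 < del /\ forall y, Rabs (y - x) < del -> Rabs (h y - h x) < eps.
Proof.
  intros Hc eps Heps. apply continuity_pt_filterlim in Hc.
  destruct (Hc eps Heps) as [del [Hdel K]]. exists del. split; auto.
  intros y Hy. destruct (Req_dec y x) as [->|Hne].
  - rewrite Rminus_eq_0, Rabs_R0; auto.
  - apply K. split; [split; [exact I|auto]|exact Hy].
Qed.

Lemma is_Iint_gt0 h l :
  is_Iint h l -> continuous_inside h -> (forall x, -1 < x < 1 -> 0 <= h x) ->
  (exists x0, -1 < x0 < 1 /\ 0 < h x0) -> 0 < l.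
Proof.
  intros H Hc Hp [x0 [Hx0 Hpos]].
  destruct (continuous_eps_delta h x0 (Hc x0 Hx0) (h x0 / 2)) as [del [Hdel K]]; [lra|].
  set (d := Rmin (del / 2) (Rmin ((x0 + 1) / 2) ((1 - x0) / 2))).
  assert (0 < d) by (repeat apply Rmin_pos; lra).
  assert (d <= del / 2) by apply Rmin_l.
  assert (d <= Rmin ((x0 + 1) / 2) ((1 - x0) / 2)) by apply Rmin_r.
  pose proof (Rmin_l ((x0 + 1) / 2) ((1 - x0) / 2)).
  pose proof (Rmin_r ((x0 + 1) / 2) ((1 - x0) / 2)).
  apply Rlt_le_trans with (RInt h (x0 - d) (x0 + d)); [|apply is_Iint_ge_RInt; auto; lra].
  apply RInt_gt_0; [lra| |intros y Hy; apply Hc; lra].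
  intros y Hy. assert (Hd : Rabs (y - x0) < del) by (apply Rabs_def1; lra).
  specialize (K y Hd). apply Rabs_def2 in K. lra.
Qed.

(* The integral is the supremum of the integrals over compact subintervals. *)
Lemma is_Iint_of_bounded_nonneg h B :
  continuous_inside h -> (forall x, -1 < x < 1 -> 0 <= h x) ->
  (forall u v, -1 < u -> u <= v -> v < 1 -> RInt h u v <= B) -> exists l, is_Iint h l.
Proof.
  intros Hc Hp HB.
  set (E := fun y => exists u v, -1 < u <= 0 /\ 0 <= v < 1 /\ y = RInt h u v).
  assert (Hb : bound E) by (exists B; intros y [u [v [Hu [Hv ->]]]]; apply HB; lra).
  assert (He : exists y, E y) by (exists (RInt h 0 0), 0, 0; repeat split; lra).
  destruct (completeness E Hb He) as [l [Hub Hlub]].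
  exists l. split; [intros; apply ex_RInt_inside; auto|].
  intros eps Heps.
  assert (Happrox : exists y, E y /\ l - eps < y).
  { apply NNPP. intro N. assert (l <= l - eps); [|lra].
    apply Hlub. intros y Ey. apply Rnot_lt_le. intro. apply N. eauto. }
  destruct Happrox as [y [[u0 [v0 [Hu0 [Hv0 ->]]]] Hy]].
  exists (Rmin (u0 + 1) (1 - v0)). split; [apply Rmin_pos; lra|].
  intros u v Hu Hv. pose proof (Rmin_l (u0 + 1) (1 - v0)). pose proof (Rmin_r (u0 + 1) (1 - v0)).
  pose proof (RInt_le_nonneg_wider h u u0 v0 v Hc Hp
                ltac:(lra) ltac:(lra) ltac:(lra) ltac:(lra) ltac:(lra)).
  assert (RInt h u v <= l) by (apply Hub; exists u, v; repeat split; lra).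
  apply Rabs_def1; lra.
Qed.

Lemma RInt_of_derive F f u v : u <= v -> (forall x, u <= x <= v -> is_derive F x (f x)) ->
  (forall x, u <= x <= v -> continuous f x) -> RInt f u v = F v - F u.
Proof.
  intros Huv HD Hc. apply is_RInt_unique.
  apply (@is_RInt_derive R_CompleteNormedModule F f u v).
  - intros x Hx. rewrite Rmin_left in Hx by lra. rewrite Rmax_right in Hx by lra. apply HD; auto.
  - intros x Hx. rewrite Rmin_left in Hx by lra. rewrite Rmax_right in Hx by lra. apply Hc; auto.
Qed.

Lemma is_Iint_0_of_primitive h H : continuous_inside h ->
  (forall x, -1 < x < 1 -> is_derive H x (h x)) ->
  (forall eps, 0 < eps -> exists del, 0 < del /\
     forall x, -1 < x < 1 -> (x < -1 + del \/ 1 - del < x) -> Rabs (H x) < eps) ->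
  is_Iint h 0.
Proof.
  intros Hc HD Hb. split; [intros; apply ex_RInt_inside; auto|].
  intros eps Heps. destruct (Hb (eps / 2)) as [del [Hdel K]]; [lra|].
  exists (Rmin del 1). split; [apply Rmin_pos; lra|].
  intros u v Hu Hv. pose proof (Rmin_l del 1). pose proof (Rmin_r del 1).
  rewrite (RInt_of_derive H h u v); [|lra|intros; apply HD; lra|intros; apply Hc; lra].
  pose proof (K u ltac:(lra) ltac:(lra)) as Ku. pose proof (K v ltac:(lra) ltac:(lra)) as Kv.
  apply Rabs_def2 in Ku. apply Rabs_def2 in Kv. apply Rabs_def1; lra.
Qed.

Lemma continuous_inside_mult f g :
  continuous_inside f -> continuous_inside g -> continuous_inside (fun x => f x * g x).
Proof. intros Hf Hg x Hx. apply (continuous_mult f g); auto. Qed.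

Lemma continuous_inside_plus f g :
  continuous_inside f -> continuous_inside g -> continuous_inside (fun x => f x + g x).
Proof. intros Hf Hg x Hx. apply (continuous_plus f g); auto. Qed.

Lemma continuous_inside_poly d f : is_poly_deg_le f d -> continuous_inside f.
Proof. intros H x _. eapply poly_continuous; eauto. Qed.

Lemma continuous_inside_const c : continuous_inside (fun _ => c).
Proof. intros x _. apply continuous_const. Qed.

(** * The Jacobi weight *)

Lemma wJ_gt0 a b x : 0 < wJ a b x.
Proof. apply Rmult_lt_0_compat; apply Rpower_gt0. Qed.

Lemma wJ_continuous a b : continuous_inside (wJ a b).
Proof.
  intros x Hx. apply (continuous_mult (fun y => Rpower (1 - y) a) (fun y => Rpower (1 + y) b)).
  - apply continuous_Rpower_one_minus; lra.
  - apply continuous_Rpower_one_plus; lra.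
Qed.

Lemma wJ_succ_l a b x : -1 < x < 1 -> wJ (a + 1) b x = (1 - x) * wJ a b x.
Proof. intro. unfold wJ. rewrite Rpower_plus, Rpower_1 by lra. ring. Qed.

(* On each half of the interval one factor of the weight is bounded. *)
Lemma wJ_le_sum a b x : -1 < x < 1 ->
  wJ a b x <= (Rpower 2 (Rabs a) + Rpower 2 (Rabs b)) * (Rpower (1 - x) a + Rpower (1 + x) b).
Proof.
  intro Hx. unfold wJ. pose proof (Rpower_gt0 (1 - x) a). pose proof (Rpower_gt0 (1 + x) b).
  pose proof (Rpower_gt0 2 (Rabs a)). pose proof (Rpower_gt0 2 (Rabs b)).
  destruct (Rle_dec 0 x).
  - assert (Rpower (1 + x) b <= Rpower 2 (Rabs b)) by (apply Rpower_le_2_abs; lra).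
    apply Rle_trans with (Rpower (1 - x) a * Rpower 2 (Rabs b)); [apply Rmult_le_compat_l|]; nra.
  - assert (Rpower (1 - x) a <= Rpower 2 (Rabs a)) by (apply Rpower_le_2_abs; lra).
    apply Rle_trans with (Rpower 2 (Rabs a) * Rpower (1 + x) b); [apply Rmult_le_compat_r|]; nra.
Qed.

Lemma RInt_Rpower_one_minus_le a u v : -1 < a -> -1 < u -> u <= v -> v < 1 ->
  RInt (fun x => Rpower (1 - x) a) u v <= Rpower 2 (a + 1) / (a + 1).
Proof.
  intros Ha Hu Huv Hv.
  rewrite (RInt_of_derive (fun x => / (a + 1) * - Rpower (1 - x) (a + 1))); auto.
  - assert (Rpower (1 - u) (a + 1) <= Rpower 2 (a + 1)) by (apply Rle_Rpower_l; lra).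
    pose proof (Rpower_gt0 (1 - v) (a + 1)).
    apply Rmult_le_reg_r with (a + 1); [lra|]. field_simplify; lra.
  - intros x Hx.
    eapply is_derive_val_eq.
    2: apply is_derive_scal, (is_derive_opp (fun y => Rpower (1 - y) (a + 1))),
         is_derive_Rpower_one_minus; lra.
    replace (a + 1 - 1) with a by ring. unfold opp; simpl. field. lra.
  - intros x Hx. apply continuous_Rpower_one_minus. lra.
Qed.

Lemma RInt_Rpower_one_plus_le b u v : -1 < b -> -1 < u -> u <= v -> v < 1 ->
  RInt (fun x => Rpower (1 + x) b) u v <= Rpower 2 (b + 1) / (b + 1).
Proof.
  intros Hb Hu Huv Hv.
  rewrite (RInt_of_derive (fun x => / (b + 1) * Rpower (1 + x) (b + 1))); auto.
  - assert (Rpower (1 + v) (b + 1) <= Rpower 2 (b + 1)) by (apply Rle_Rpower_l; lra).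
    pose proof (Rpower_gt0 (1 + u) (b + 1)).
    apply Rmult_le_reg_r with (b + 1); [lra|]. field_simplify; lra.
  - intros x Hx. eapply is_derive_val_eq.
    2: apply is_derive_scal, is_derive_Rpower_one_plus; lra.
    replace (b + 1 - 1) with b by ring. field. lra.
  - intros x Hx. apply continuous_Rpower_one_plus. lra.
Qed.

Lemma RInt_wJ_bounded a b : -1 < a -> -1 < b ->
  exists B, forall u v, -1 < u -> u <= v -> v < 1 -> RInt (wJ a b) u v <= B.
Proof.
  intros Ha Hb. set (K := Rpower 2 (Rabs a) + Rpower 2 (Rabs b)).
  assert (HK : 0 < K) by (pose proof (Rpower_gt0 2 (Rabs a)); pose proof (Rpower_gt0 2 (Rabs b)); unfold K; lra).
  exists (K * (Rpower 2 (a + 1) / (a + 1) + Rpower 2 (b + 1) / (b + 1))).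
  intros u v Hu Huv Hv.
  set (f1 := fun x => Rpower (1 - x) a). set (f2 := fun x => Rpower (1 + x) b).
  assert (E1 : ex_RInt f1 u v).
  { apply ex_RInt_inside; auto. intros x Hx. apply continuous_Rpower_one_minus. lra. }
  assert (E2 : ex_RInt f2 u v).
  { apply ex_RInt_inside; auto. intros x Hx. apply continuous_Rpower_one_plus. lra. }
  assert (E12 : ex_RInt (fun x => f1 x + f2 x) u v) by exact (ex_RInt_plus f1 f2 u v E1 E2).
  apply Rle_trans with (RInt (fun x => K * (f1 x + f2 x)) u v).
  - apply RInt_le; auto.
    + apply ex_RInt_inside; auto. apply wJ_continuous.
    + exact (ex_RInt_scal (fun x => f1 x + f2 x) u v K E12).
    + intros x Hx. apply wJ_le_sum. lra.
  - pose proof (RInt_scal (fun x => f1 x + f2 x) u v K E12) as HS.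
    pose proof (RInt_plus f1 f2 u v E1 E2) as HP.
    change scal with Rmult in HS. change plus with Rplus in HP. simpl in HS, HP. unfold mult in HS; simpl in HS.
    rewrite HS, HP. apply Rmult_le_compat_l; [lra|]. apply Rplus_le_compat.
    + apply RInt_Rpower_one_minus_le; auto.
    + apply RInt_Rpower_one_plus_le; auto.
Qed.

Lemma is_Iint_poly_wJ_ex a b d q : -1 < a -> -1 < b -> is_poly_deg_le q d ->
  exists l, is_Iint (fun x => q x * wJ a b x) l.
Proof.
  intros Ha Hb Hq. destruct (poly_bounded_on_I d q Hq) as [M HM].
  assert (HM0 : 0 <= M) by (specialize (HM 0 ltac:(lra)); pose proof (Rabs_pos (q 0)); lra).
  assert (HqM : forall x, -1 < x < 1 -> - M <= q x <= M).
  { intros x Hx. apply Rabs_le_between, HM; lra. }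
  destruct (RInt_wJ_bounded a b Ha Hb) as [B HB].
  assert (Hw : continuous_inside (wJ a b)) by apply wJ_continuous.
  assert (HRInt : forall k u v, -1 < u -> u <= v -> v < 1 -> 0 <= k ->
            RInt (fun x => k * wJ a b x) u v <= k * B).
  { intros k u v Hu Huv Hv Hk. pose proof (RInt_scal (wJ a b) u v k ltac:(apply ex_RInt_inside; auto)) as HS.
    change scal with Rmult in HS. simpl in HS. unfold mult in HS; simpl in HS. rewrite HS.
    apply Rmult_le_compat_l; auto. }
  (* Write [q w] as the difference of the nonnegative [(q + M) w] and [M w]. *)
  destruct (is_Iint_of_bounded_nonneg (fun x => M * wJ a b x) (M * B)) as [l2 H2].
  - apply continuous_inside_mult; [apply continuous_inside_const|auto].
  - intros x Hx. pose proof (wJ_gt0 a b x). nra.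
  - intros; apply HRInt; auto.
  - destruct (is_Iint_of_bounded_nonneg (fun x => (q x + M) * wJ a b x) (2 * M * B)) as [l1 H1].
    + apply continuous_inside_mult; auto.
      apply continuous_inside_plus; [eapply continuous_inside_poly; eauto|apply continuous_inside_const].
    + intros x Hx. specialize (HqM x Hx). pose proof (wJ_gt0 a b x). nra.
    + intros u v Hu Huv Hv. apply Rle_trans with (RInt (fun x => (2 * M) * wJ a b x) u v).
      * apply RInt_le; auto.
        -- apply ex_RInt_inside; auto. apply continuous_inside_mult; auto.
           apply continuous_inside_plus; [eapply continuous_inside_poly; eauto|apply continuous_inside_const].
        -- apply ex_RInt_inside; auto. apply continuous_inside_mult; [apply continuous_inside_const|auto].
        -- intros x Hx. specialize (HqM x ltac:(lra)). pose proof (wJ_gt0 a b x). nra.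
      * apply HRInt; auto; lra.
    + exists (l1 - l2). eapply is_Iint_ext; [|apply (is_Iint_minus _ _ _ _ H1 H2)].
      intros; simpl; ring.
Qed.

Lemma wJ_small_near_ends A B : 0 < A -> 0 < B -> forall eps, 0 < eps ->
  exists del, 0 < del /\ forall x, -1 < x < 1 -> (x < -1 + del \/ 1 - del < x) -> wJ A B x < eps.
Proof.
  intros HA HB eps Heps.
  set (C := Rpower 2 A + Rpower 2 B).
  pose proof (Rpower_gt0 2 A). pose proof (Rpower_gt0 2 B).
  assert (HC : 0 < C) by (unfold C; lra).
  destruct (Rpower_small_near_0 A HA (eps / C)) as [d1 [Hd1 K1]]; [apply Rdiv_lt_0_compat; lra|].
  destruct (Rpower_small_near_0 B HB (eps / C)) as [d2 [Hd2 K2]]; [apply Rdiv_lt_0_compat; lra|].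
  assert (HCe : C * (eps / C) = eps) by (field; lra).
  exists (Rmin d1 d2). split; [apply Rmin_pos; lra|]. intros x Hx Hor.
  pose proof (Rmin_l d1 d2). pose proof (Rmin_r d1 d2). unfold wJ.
  pose proof (Rpower_gt0 (1 - x) A). pose proof (Rpower_gt0 (1 + x) B).
  assert (Rpower (1 - x) A <= Rpower 2 A) by (apply Rle_Rpower_l; lra).
  assert (Rpower (1 + x) B <= Rpower 2 B) by (apply Rle_Rpower_l; lra).
  destruct Hor as [Hl|Hr].
  - assert (Rpower (1 + x) B < eps / C) by (apply K2; lra). unfold C in *. nra.
  - assert (Rpower (1 - x) A < eps / C) by (apply K1; lra). unfold C in *. nra.
Qed.

Lemma wJ_mul_bounded_small_near_ends A B g M : 0 < A -> 0 < B ->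
  (forall x, -1 <= x <= 1 -> Rabs (g x) <= M) -> forall eps, 0 < eps ->
  exists del, 0 < del /\ forall x, -1 < x < 1 -> (x < -1 + del \/ 1 - del < x) ->
    Rabs (wJ A B x * g x) < eps.
Proof.
  intros HA HB HM eps Heps.
  assert (HM0 : 0 <= M) by (specialize (HM 0 ltac:(lra)); pose proof (Rabs_pos (g 0)); lra).
  destruct (wJ_small_near_ends A B HA HB (eps / (M + 1))) as [del [Hdel K]].
  { apply Rdiv_lt_0_compat; lra. }
  exists del. split; auto. intros x Hx Hor.
  specialize (K x Hx Hor). specialize (HM x ltac:(lra)). pose proof (wJ_gt0 A B x).
  rewrite Rabs_mult, (Rabs_right (wJ A B x)) by lra.
  apply Rle_lt_trans with (wJ A B x * (M + 1)); [apply Rmult_le_compat_l; lra|].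
  apply Rlt_le_trans with (eps / (M + 1) * (M + 1)); [apply Rmult_lt_compat_r; lra|].
  right. field. lra.
Qed.

(** * Orthogonality of Jacobi polynomials *)

Lemma binom_n_0 n : Binomial.C n 0 = 1.
Proof. unfold Binomial.C. rewrite Nat.sub_0_r. simpl. field. apply INR_fact_neq_0. Qed.

Lemma binom_n_n n : Binomial.C n n = 1.
Proof. unfold Binomial.C. rewrite Nat.sub_diag. simpl. field. apply INR_fact_neq_0. Qed.

(* [leibniz_sum u v j] is the Leibniz expansion of the [j]-th derivative of [u 0 * v 0]
   when [u k], [v k] are the [k]-th derivatives of [u 0], [v 0]. *)
Definition leibniz_sum (u v : nat -> R -> R) j x :=
  sum_f_R0 (fun i => Binomial.C j i * u (j - i)%nat x * v i x) j.

Lemma leibniz_sum_step (U V : nat -> R) j :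
  sum_f_R0 (fun i => Binomial.C j i * (U (S (j - i)) * V i + U (j - i)%nat * V (S i))) j
  = sum_f_R0 (fun i => Binomial.C (S j) i * U (S j - i)%nat * V i) (S j).
Proof.
  destruct j as [|j].
  - simpl. rewrite binom_n_0, binom_n_n.
    replace (Binomial.C 1 1) with 1 by (symmetry; apply binom_n_n). rewrite !binom_n_0. ring.
  - transitivity (sum_f_R0 (fun i => Binomial.C (S j) i * U (S (S j - i)) * V i) (S j)
       + sum_f_R0 (fun i => Binomial.C (S j) i * U (S j - i)%nat * V (S i)) (S j)).
    { rewrite <- plus_sum. apply sum_eq. intros; ring. }
    rewrite (decomp_sum (fun i => Binomial.C (S j) i * U (S (S j - i)) * V i) (S j)) by lia.
    rewrite (tech5 (fun i => Binomial.C (S j) i * U (S j - i)%nat * V (S i)) j).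
    rewrite (decomp_sum _ (S (S j))) by lia. simpl pred.
    rewrite (tech5 (fun i => Binomial.C (S (S j)) (S i) * U (S (S j) - S i)%nat * V (S i)) j).
    simpl pred.
    assert (E : sum_f_R0 (fun i => Binomial.C (S (S j)) (S i) * U (S (S j) - S i)%nat * V (S i)) j
      = sum_f_R0 (fun i => Binomial.C (S j) (S i) * U (S (S j - S i)) * V (S i)) j
        + sum_f_R0 (fun i => Binomial.C (S j) i * U (S j - i)%nat * V (S i)) j).
    { rewrite <- plus_sum. apply sum_eq. intros i Hi.
      rewrite <- pascal by lia.
      replace (S (S j - S i)) with (S j - i)%nat by lia.
      replace (S (S j) - S i)%nat with (S j - i)%nat by lia. ring. }
    rewrite E, !binom_n_0, !binom_n_n.
    replace (S j - S j)%nat with 0%nat by lia. replace (S (S j) - S (S j))%nat with 0%nat by lia.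
    replace (S (S j - 0)) with (S (S j) - 0)%nat by lia. ring.
Qed.

Lemma is_derive_leibniz_sum u v j x :
  (forall k, is_derive (u k) x (u (S k) x)) -> (forall k, is_derive (v k) x (v (S k) x)) ->
  is_derive (leibniz_sum u v j) x (leibniz_sum u v (S j) x).
Proof.
  intros Hu Hv. unfold leibniz_sum. rewrite <- (leibniz_sum_step (fun k => u k x) (fun k => v k x)).
  apply (is_derive_sum_f_R0 (fun i y => Binomial.C j i * u (j - i)%nat y * v i y)
    (fun i y => Binomial.C j i * (u (S (j - i)) y * v i y + u (j - i)%nat y * v (S i) y))).
  intros i Hi. apply (is_derive_ext (fun y => Binomial.C j i * (u (j - i)%nat y * v i y))).
  { intros; simpl; ring. }
  apply is_derive_scal. eapply is_derive_val_eq; [|apply Derive.is_derive_mult; auto]. ring.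
Qed.

Definition dpow_one_minus (A : R) (n k : nat) (x : R) :=
  (-1) ^ k * fallfac (INR n + A) k * Rpower (1 - x) (INR n + A - INR k).
Definition dpow_one_plus (B : R) (n k : nat) (x : R) :=
  fallfac (INR n + B) k * Rpower (1 + x) (INR n + B - INR k).

Lemma is_derive_dpow_one_minus A n k x : x < 1 ->
  is_derive (dpow_one_minus A n k) x (dpow_one_minus A n (S k) x).
Proof.
  intro Hx. unfold dpow_one_minus.
  apply (is_derive_ext (fun y => ((-1) ^ k * fallfac (INR n + A) k) * Rpower (1 - y) (INR n + A - INR k))).
  { intro; simpl; ring. }
  eapply is_derive_val_eq; [|apply is_derive_scal, is_derive_Rpower_one_minus; auto].
  rewrite S_INR. simpl. replace (INR n + A - (INR k + 1)) with (INR n + A - INR k - 1) by ring. ring.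
Qed.

Lemma is_derive_dpow_one_plus B n k x : -1 < x ->
  is_derive (dpow_one_plus B n k) x (dpow_one_plus B n (S k) x).
Proof.
  intro Hx. unfold dpow_one_plus.
  eapply is_derive_val_eq; [|apply is_derive_scal, is_derive_Rpower_one_plus; auto].
  rewrite S_INR. simpl. replace (INR n + B - (INR k + 1)) with (INR n + B - INR k - 1) by ring. ring.
Qed.

(* The [j]-th derivative of [(1 - x)^(n + A) (1 + x)^(n + B)]. *)
Definition rodrigues_deriv A B n j x := leibniz_sum (dpow_one_minus A n) (dpow_one_plus B n) j x.

Lemma is_derive_rodrigues_deriv A B n j x : -1 < x < 1 ->
  is_derive (rodrigues_deriv A B n j) x (rodrigues_deriv A B n (S j) x).
Proof.
  intro Hx. apply is_derive_leibniz_sum; intro k.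
  - apply is_derive_dpow_one_minus; lra.
  - apply is_derive_dpow_one_plus; lra.
Qed.

Lemma rodrigues_deriv_continuous A B n j : continuous_inside (rodrigues_deriv A B n j).
Proof.
  intros x Hx. apply (ex_derive_continuous (rodrigues_deriv A B n j)).
  eexists. apply is_derive_rodrigues_deriv; auto.
Qed.

Definition rodrigues_const (n : nat) := (-1) ^ n / (2 ^ n * INR (Factorial.fact n)).

Lemma jacobiP_rodrigues A B n x : -1 < x < 1 ->
  jacobiP A B n x * wJ A B x = rodrigues_const n * rodrigues_deriv A B n n x.
Proof.
  intro Hx. unfold jacobiP, rodrigues_deriv, leibniz_sum.
  rewrite Rmult_comm, scal_sum, scal_sum.
  apply sum_eq. intros i Hi. set (r := (n - i)%nat).
  assert (Hn : n = (i + r)%nat) by (unfold r; lia).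
  unfold dpow_one_minus, dpow_one_plus, gbinom, Binomial.C, wJ. fold r.
  assert (E1 : INR n + A - INR r = A + INR i) by (rewrite Hn, plus_INR; ring).
  assert (E2 : INR n + B - INR i = B + INR r) by (rewrite Hn, plus_INR; ring).
  rewrite E1, E2, !Rpower_plus_INR by lra.
  unfold rodrigues_const. rewrite Hn, !pow_add.
  replace ((x - 1) / 2) with ((-1) * (1 - x) * / 2) by field.
  replace ((x + 1) / 2) with ((1 + x) * / 2) by field.
  rewrite !Rpow_mult_distr, !pow_inv.
  assert (Hr : (-1) ^ r * (-1) ^ r = 1).
  { rewrite <- Rpow_mult_distr. replace (-1 * -1) with 1 by ring. apply pow1. }
  replace (i + r - i)%nat with r by lia.
  assert (F1 := INR_fact_neq_0 i). assert (F2 := INR_fact_neq_0 r).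
  assert (F3 := INR_fact_neq_0 (i + r)).
  assert (P1 : 2 ^ i <> 0) by (apply pow_nonzero; lra).
  assert (P2 : 2 ^ r <> 0) by (apply pow_nonzero; lra).
  match goal with |- ?L = ?R => transitivity (L * ((-1) ^ r * (-1) ^ r)) end.
  - rewrite Hr; ring.
  - field; auto.
Qed.

(* Below order [n] the Rodrigues derivatives keep a factor [w_{A+1,B+1}]. *)
Definition rodrigues_cofactor A B n j x := sum_f_R0 (fun i => Binomial.C j i *
   ((-1) ^ (j - i) * fallfac (INR n + A) (j - i) * (1 - x) ^ (n - 1 - (j - i)))
   * (fallfac (INR n + B) i * (1 + x) ^ (n - 1 - i))) j.

Lemma rodrigues_deriv_factor A B n j x : (1 <= n)%nat -> (j <= n - 1)%nat -> -1 < x < 1 ->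
  rodrigues_deriv A B n j x = wJ (A + 1) (B + 1) x * rodrigues_cofactor A B n j x.
Proof.
  intros Hn Hj Hx. unfold rodrigues_deriv, leibniz_sum, rodrigues_cofactor.
  rewrite scal_sum. apply sum_eq. intros i Hi.
  unfold dpow_one_minus, dpow_one_plus, wJ.
  assert (E1 : INR n + A - INR (j - i) = (A + 1) + INR (n - 1 - (j - i))).
  { replace n with ((n - 1 - (j - i)) + (j - i) + 1)%nat at 1 by lia. rewrite !plus_INR. simpl. ring. }
  assert (E2 : INR n + B - INR i = (B + 1) + INR (n - 1 - i)).
  { replace n with ((n - 1 - i) + i + 1)%nat at 1 by lia. rewrite !plus_INR. simpl. ring. }
  rewrite E1, E2, !Rpower_plus_INR by lra. ring.
Qed.

Lemma poly_one_minus_one_plus d p q (c : R) : (p + q <= d)%nat ->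
  is_poly_deg_le (fun x => c * ((1 - x) ^ p * (1 + x) ^ q)) d.
Proof.
  intro H. apply poly_scal. apply poly_deg_mono with (p * 1 + q * 1)%nat; [lia|].
  apply poly_mul.
  - apply (poly_ext _ (fun x => (-1 * x + 1) ^ p)); [intro; f_equal; ring|].
    apply poly_pow, poly_affine.
  - apply (poly_ext _ (fun x => (1 * x + 1) ^ q)); [intro; f_equal; ring|].
    apply poly_pow, poly_affine.
Qed.

Lemma poly_rodrigues_cofactor A B n j : is_poly_deg_le (rodrigues_cofactor A B n j) (2 * n).
Proof.
  unfold rodrigues_cofactor.
  apply (poly_sum_f_R0 _ j (fun i x => Binomial.C j i *
   ((-1) ^ (j - i) * fallfac (INR n + A) (j - i) * (1 - x) ^ (n - 1 - (j - i)))
   * (fallfac (INR n + B) i * (1 + x) ^ (n - 1 - i)))).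
  intros i Hi.
  apply (poly_ext _ (fun x => (Binomial.C j i * (-1) ^ (j - i) * fallfac (INR n + A) (j - i)
           * fallfac (INR n + B) i) * ((1 - x) ^ (n - 1 - (j - i)) * (1 + x) ^ (n - 1 - i)))).
  - intro; ring.
  - apply poly_one_minus_one_plus. lia.
Qed.

Lemma sum_f_R0_telescope (T : nat -> R) N : sum_f_R0 (fun i => T i - T (S i)) N = T 0%nat - T (S N).
Proof. induction N as [|N IH]; simpl; [ring|rewrite IH; ring]. Qed.

(* [n]-fold integration by parts. *)
Lemma is_derive_parts_primitive (D Phi : nat -> R -> R) n x : (1 <= n)%nat ->
  (forall i, is_derive (D i) x (D (S i) x)) -> (forall j, is_derive (Phi j) x (Phi (S j) x)) ->
  D n x = 0 ->
  is_derive (fun y => sum_f_R0 (fun i => (-1) ^ i * D i y * Phi (n - 1 - i)%nat y) (n - 1)) x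
    (D 0%nat x * Phi n x).
Proof.
  intros Hn HD HPhi HDn.
  eapply is_derive_val_eq.
  2: apply (is_derive_sum_f_R0 (fun i y => (-1) ^ i * D i y * Phi (n - 1 - i)%nat y)
       (fun i y => (-1) ^ i * (D (S i) y * Phi (n - 1 - i)%nat y + D i y * Phi (S (n - 1 - i)) y))).
  - set (T := fun i => (-1) ^ i * D i x * Phi (n - i)%nat x).
    rewrite (sum_eq _ (fun i => T i - T (S i))).
    + rewrite sum_f_R0_telescope. unfold T. replace (S (n - 1)) with n by lia.
      rewrite HDn. replace (n - 0)%nat with n by lia. simpl. ring.
    + intros i Hi. unfold T. replace (S (n - 1 - i)) with (n - i)%nat by lia.
      replace (n - S i)%nat with (n - 1 - i)%nat by lia. simpl. ring.
  - intros i Hi. apply (is_derive_ext (fun y => (-1) ^ i * (D i y * Phi (n - 1 - i)%nat y))).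
    { intro; simpl; ring. }
    apply is_derive_scal. eapply is_derive_val_eq; [|apply Derive.is_derive_mult; auto]. ring.
Qed.

Theorem jacobiP_orthogonal A B n g : -1 < A -> -1 < B -> (1 <= n)%nat ->
  is_poly_deg_le g (n - 1) -> is_Iint (fun x => jacobiP A B n x * g x * wJ A B x) 0.
Proof.
  intros HA HB Hn Hg.
  destruct (poly_derive_tower (n - 1) g Hg) as [D [D0 [Dd [Dn DP]]]].
  replace (S (n - 1)) with n in Dn by lia.
  set (H := fun x => sum_f_R0 (fun i => (-1) ^ i * D i x * rodrigues_deriv A B n (n - 1 - i) x) (n - 1)).
  set (Q := fun x => sum_f_R0 (fun i => (-1) ^ i * D i x * rodrigues_cofactor A B n (n - 1 - i) x) (n - 1)).
  assert (HQ : is_poly_deg_le Q (n - 1 + 2 * n)).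
  { apply (poly_sum_f_R0 _ (n - 1) (fun i x => (-1) ^ i * D i x * rodrigues_cofactor A B n (n - 1 - i) x)).
    intros i Hi. apply (poly_ext _ (fun x => (-1) ^ i * (D i x * rodrigues_cofactor A B n (n - 1 - i) x))).
    - intro; ring.
    - apply poly_scal, poly_mul; [apply DP|apply poly_rodrigues_cofactor]. }
  assert (HHQ : forall x, -1 < x < 1 -> H x = wJ (A + 1) (B + 1) x * Q x).
  { intros x Hx. unfold H, Q. rewrite scal_sum. apply sum_eq. intros i Hi.
    rewrite rodrigues_deriv_factor; auto; try lia. ring. }
  assert (Hmain : is_Iint (fun x => g x * rodrigues_deriv A B n n x) 0).
  { apply is_Iint_0_of_primitive with H.
    - apply continuous_inside_mult; [eapply continuous_inside_poly; eauto|apply rodrigues_deriv_continuous].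
    - intros x Hx. rewrite <- D0. apply is_derive_parts_primitive; auto.
      intro; apply is_derive_rodrigues_deriv; auto.
    - destruct (poly_bounded_on_I _ _ HQ) as [M HM].
      intros eps Heps.
      destruct (wJ_mul_bounded_small_near_ends (A + 1) (B + 1) Q M ltac:(lra) ltac:(lra) HM eps Heps)
        as [del [Hdel K]].
      exists del. split; auto. intros x Hx Hor. rewrite HHQ by auto. apply K; auto. }
  apply is_Iint_ext with (fun x => rodrigues_const n * (g x * rodrigues_deriv A B n n x)).
  - intros x Hx. rewrite Rmult_assoc, (Rmult_comm (g x)), <- Rmult_assoc, <- jacobiP_rodrigues by auto.
    ring.
  - replace 0 with (rodrigues_const n * 0) by ring. apply is_Iint_scal; auto.
Qed.

(** * Zeros of orthogonal polynomials *)

Definition sign_const_inside (F : R -> R) :=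
  (forall x, -1 < x < 1 -> 0 <= F x) \/ (forall x, -1 < x < 1 -> F x <= 0).

Lemma poly_sign_const_of_no_root d f : is_poly_deg_le f d ->
  (forall x, -1 < x < 1 -> f x <> 0) -> sign_const_inside f.
Proof.
  intros Hf Hnz.
  assert (Hc : continuity f) by (intro x; apply continuity_pt_filterlim; eapply poly_continuous; eauto).
  destruct (classic (exists x, -1 < x < 1 /\ f x < 0)) as [[x [Hx Hfx]]|N].
  - right. intros y Hy. apply Rnot_lt_le. intro Hfy.
    destruct (Rtotal_order x y) as [Hxy|[<-|Hyx]]; [| lra |].
    + destruct (IVT f x y Hc Hxy Hfx Hfy) as [z [Hz Hfz]]. apply (Hnz z); auto; lra.
    + destruct (IVT (fun t => - f t) y x) as [z [Hz Hfz]]; auto; try lra.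
      * apply continuity_opp; auto.
      * apply (Hnz z); lra.
  - left. intros y Hy. apply Rnot_lt_le. intro. apply N. eauto.
Qed.

(* Dividing out the roots of odd multiplicity in (-1,1): [f * prod_roots zo] has a
   constant sign there, with [zo] a duplicate-free list of roots of [f]. *)
Lemma poly_sign_decomposition d : forall f, is_poly_deg_le f d ->
  exists zo, NoDup zo /\ (forall z, In z zo -> -1 < z < 1 /\ f z = 0) /\
    (length zo <= d)%nat /\ sign_const_inside (fun x => f x * prod_roots zo x).
Proof.
  induction d as [|d IH]; intros f Hf.
  - exists nil. split; [constructor|split; [simpl; tauto|split; [simpl; lia|]]].
    apply poly_deg_0_iff in Hf as [c Hc]. destruct (Rle_dec 0 c).
    + left. intros; rewrite Hc; simpl; lra.
    + right. intros; rewrite Hc; simpl; lra.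
  - destruct (classic (exists z, -1 < z < 1 /\ f z = 0)) as [[z [Hz Hfz]]|N].
    + destruct (poly_factor_root _ _ _ Hf Hfz) as [h [Hh Hfh]]. simpl in Hh. rewrite Nat.sub_0_r in Hh.
      destruct (IH h Hh) as [zo [Hnd [Hroots [Hlen Hsg]]]].
      assert (Hroot : forall y, In y zo -> -1 < y < 1 /\ f y = 0).
      { intros y Hy. destruct (Hroots y Hy) as [Hy1 Hy2]. split; auto. rewrite Hfh, Hy2; ring. }
      destruct (in_dec Req_EM_T z zo) as [Hin|Hnin].
      * exists (remove Req_EM_T z zo). split; [apply NoDup_remove_R; auto|split; [|split]].
        -- intros y Hy. apply in_remove in Hy as [Hy _]. auto.
        -- pose proof (remove_length_lt Req_EM_T zo z Hin). lia.
        -- destruct Hsg as [Hs|Hs]; [left|right]; intros x Hx; specialize (Hs x Hx);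
             rewrite (prod_roots_remove z zo Hnd Hin x) in Hs; rewrite Hfh; lra.
      * exists (z :: zo). split; [constructor; auto|split; [|split]].
        -- intros y [<-|Hy]; auto.
        -- simpl; lia.
        -- assert (E : forall x, f x * prod_roots (z :: zo) x = (x - z) * (x - z) * (h x * prod_roots zo x)).
           { intro x. rewrite Hfh. simpl. ring. }
           destruct Hsg as [Hs|Hs]; [left|right]; intros x Hx; specialize (Hs x Hx);
             rewrite E; pose proof (Rle_0_sqr (x - z)); unfold Rsqr in *; nra.
    + exists nil. split; [constructor|split; [simpl; tauto|split; [simpl; lia|]]].
      destruct (poly_sign_const_of_no_root _ _ Hf) as [Hs|Hs].
      * intros x Hx E. apply N; eauto.
      * left; intros; simpl; rewrite Rmult_1_r; auto.
      * right; intros; simpl; rewrite Rmult_1_r; auto.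
Qed.

(* The points [1/(k+2)], [k <= d], are [d+1] distinct points of (-1,1). *)
Lemma poly_nonzero_inside d F : is_poly_deg_le F d -> F 1 <> 0 ->
  exists y, -1 < y < 1 /\ F y <> 0.
Proof.
  intros HF H1. apply NNPP. intro N. apply H1.
  set (l := map (fun k => / INR (k + 2)) (seq 0 (S d))).
  assert (Hnd : NoDup l).
  { apply FinFun.Injective_map_NoDup; [|apply seq_NoDup]. intros k1 k2 E.
    apply Rinv_eq_reg, INR_eq in E. lia. }
  assert (Hlen : length l = S d) by (unfold l; rewrite length_map, length_seq; auto).
  apply (poly_eq0_of_roots l d F HF Hnd); [|lia].
  intros r Hr. apply in_map_iff in Hr as [k [<- _]].
  apply NNPP. intro Hne. apply N. exists (/ INR (k + 2)). split; auto.
  assert (2 <= INR (k + 2)) by (rewrite plus_INR; simpl; pose proof (pos_INR k); lra).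
  split.
  - assert (0 < / INR (k + 2)) by (apply Rinv_0_lt_compat; lra). lra.
  - apply Rmult_lt_reg_l with (INR (k + 2)); [lra|]. rewrite Rinv_r by lra. lra.
Qed.

Lemma is_Iint_sign_const_neq0 F A B l : continuous_inside F -> sign_const_inside F ->
  (exists y, -1 < y < 1 /\ F y <> 0) -> is_Iint (fun x => F x * wJ A B x) l -> l <> 0.
Proof.
  intros Hc Hsign [y [Hy Fy]] HI.
  assert (HcFw : continuous_inside (fun x => F x * wJ A B x))
    by (apply continuous_inside_mult; [auto|apply wJ_continuous]).
  destruct Hsign as [Hs|Hs].
  - assert (0 < l); [|lra]. apply (is_Iint_gt0 _ _ HI HcFw).
    + intros x Hx. specialize (Hs x Hx). pose proof (wJ_gt0 A B x). nra.
    + exists y. split; auto. specialize (Hs y Hy). pose proof (wJ_gt0 A B y).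
      assert (0 < F y) by lra. nra.
  - assert (0 < -1 * l); [|lra]. apply (is_Iint_gt0 _ _ (is_Iint_scal (-1) _ _ HI)).
    + apply continuous_inside_mult; [apply continuous_inside_const|auto].
    + intros x Hx. specialize (Hs x Hx). pose proof (wJ_gt0 A B x). nra.
    + exists y. split; auto. specialize (Hs y Hy). pose proof (wJ_gt0 A B y).
      assert (F y < 0) by lra. nra.
Qed.

Lemma orthogonal_poly_factor A B m P : (1 <= m)%nat ->
  is_poly_deg_le P m -> P 1 <> 0 ->
  (forall g, is_poly_deg_le g (m - 1) -> is_Iint (fun x => P x * g x * wJ A B x) 0) ->
  exists zo k, NoDup zo /\ length zo = m /\ (forall z, In z zo -> -1 < z < 1) /\ k <> 0 /\
    forall x, P x = k * prod_roots zo x.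
Proof.
  intros Hm HP HP1 Horth.
  destruct (poly_sign_decomposition m _ HP) as [zo [Hnd [Hroots [Hlen Hsg]]]].
  assert (Hlen2 : length zo = m).
  { destruct (Nat.eq_dec (length zo) m) as [|Hne]; auto. exfalso.
    set (F := fun x => P x * prod_roots zo x).
    assert (HF : is_poly_deg_le F (m + length zo)) by (apply poly_mul; auto; apply poly_prod_roots).
    assert (HF1 : F 1 <> 0).
    { apply Rmult_integral_contrapositive. split; auto. apply prod_roots_neq0. intro Hin.
      destruct (Hroots 1 Hin) as [Hz _]. lra. }
    apply (is_Iint_sign_const_neq0 F A B 0); auto.
    - eapply continuous_inside_poly; eauto.
    - eapply poly_nonzero_inside; eauto.
    - apply Horth. apply poly_deg_mono with (length zo); [lia|apply poly_prod_roots]. }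
  destruct (poly_factor_roots zo m _ HP Hnd) as [h [Hh HPh]]; [intros z Hz; apply Hroots; auto|].
  rewrite Hlen2, Nat.sub_diag in Hh. apply poly_deg_0_iff in Hh as [k Hk].
  exists zo, k. split; [auto|split; [auto|split; [intros z Hz; apply Hroots; auto|split]]].
  - intro Hk0. apply HP1. rewrite HPh, Hk, Hk0. ring.
  - intro x. rewrite HPh, Hk. ring.
Qed.

Lemma poly_jacobiP A B n : is_poly_deg_le (jacobiP A B n) n.
Proof.
  unfold jacobiP. apply (poly_sum_f_R0 n n (fun k x => gbinom (INR n + A) (n - k) * gbinom (INR n + B) k *
      ((x - 1) / 2) ^ k * ((x + 1) / 2) ^ (n - k))).
  intros k Hk.
  apply (poly_ext _ (fun x => (gbinom (INR n + A) (n - k) * gbinom (INR n + B) k) *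
           ((/ 2 * x + - / 2) ^ k * (/ 2 * x + / 2) ^ (n - k)))).
  - intro x. replace ((x - 1) / 2) with (/ 2 * x + - / 2) by field.
    replace ((x + 1) / 2) with (/ 2 * x + / 2) by field. ring.
  - apply poly_scal, poly_deg_mono with (k * 1 + (n - k) * 1)%nat; [lia|].
    apply poly_mul; apply poly_pow, poly_affine.
Qed.

Lemma fallfac_gt0 z k : (forall j, (j < k)%nat -> 0 < z - INR j) -> 0 < fallfac z k.
Proof.
  induction k as [|k IH]; intro H; simpl; [lra|].
  apply Rmult_lt_0_compat; [apply IH; intros; apply H; lia|apply H; lia].
Qed.

Lemma jacobiP_1_gt0 A B n : -1 < A -> 0 < jacobiP A B n 1.
Proof.
  intro HA. unfold jacobiP.
  assert (Hg : 0 < gbinom (INR n + A) n).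
  { apply Rdiv_lt_0_compat; [|apply INR_fact_lt_0]. apply fallfac_gt0. intros j Hj.
    assert (INR j + 1 <= INR n) by (rewrite <- S_INR; apply le_INR; lia). lra. }
  destruct n as [|n].
  - simpl in *. unfold gbinom in *. simpl in *. lra.
  - rewrite decomp_sum, sum_eq_R0 by (try lia; intros k Hk; replace ((1 - 1) / 2) with 0 by field; simpl; ring).
    replace (S n - 0)%nat with (S n) by lia.
    replace (gbinom (INR (S n) + B) 0) with 1 by (unfold gbinom; simpl; field).
    replace ((1 + 1) / 2) with 1 by field. rewrite pow1, pow_O. lra.
Qed.

Lemma jacobiP_0 A B x : jacobiP A B 0 x = 1.
Proof. unfold jacobiP, gbinom. simpl. field. Qed.

(** * Gauss-Radau quadrature *)

Fixpoint sum_over (l : list R) (g : R -> R) : R :=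
  match l with nil => 0 | y :: l' => g y + sum_over l' g end.

Lemma sum_over_eq0 l g : (forall y, In y l -> g y = 0) -> sum_over l g = 0.
Proof.
  induction l as [|y l IH]; simpl; intro H; [auto|].
  rewrite H, IH; [ring| |left; auto]. intros; apply H; right; auto.
Qed.

Lemma sum_over_delta l g y0 : NoDup l -> In y0 l ->
  (forall y, In y l -> y <> y0 -> g y = 0) -> sum_over l g = g y0.
Proof.
  induction l as [|y l IH]; simpl; intros Hnd Hin H; [contradiction|]. inversion Hnd; subst.
  destruct Hin as [->|Hin].
  - rewrite sum_over_eq0; [ring|]. intros y Hy. apply H; [right; auto|]. intros ->. contradiction.
  - rewrite IH; auto.
    rewrite H; [ring|left; auto|]. intros ->. contradiction.
Qed.

Lemma poly_sum_over d l (G : R -> R -> R) :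
  (forall y, In y l -> is_poly_deg_le (G y) d) -> is_poly_deg_le (fun x => sum_over l (fun y => G y x)) d.
Proof.
  induction l as [|y l IH]; simpl; intro H; [apply poly_const|].
  apply poly_add; [apply H; auto|apply IH; auto].
Qed.

Lemma is_Iint_sum_over l (G : R -> R -> R) (I : R -> R) :
  (forall y, In y l -> is_Iint (G y) (I y)) ->
  is_Iint (fun x => sum_over l (fun y => G y x)) (sum_over l I).
Proof.
  induction l as [|y l IH]; simpl; intro H.
  - split.
    + intros. apply (ex_RInt_ext (fun _ => 0)); [auto|apply ex_RInt_const].
    + intros eps Heps. exists 1. split; [lra|]. intros. rewrite RInt_const.
      unfold scal; simpl; unfold mult; simpl. rewrite Rmult_0_r, Rminus_0_r, Rabs_R0. auto.
  - apply (is_Iint_plus (G y) (fun x => sum_over l (fun y => G y x))); [apply H|apply IH]; auto.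
Qed.

Lemma sum_over_nonneg l g : (forall y, In y l -> 0 <= g y) -> 0 <= sum_over l g.
Proof.
  induction l as [|y l IH]; simpl; intro H; [lra|].
  pose proof (H y (or_introl eq_refl)). pose proof (IH (fun z Hz => H z (or_intror Hz))). lra.
Qed.

Lemma sum_over_nonpos_eq0 l g : (forall y, In y l -> 0 <= g y) -> sum_over l g <= 0 ->
  forall y, In y l -> g y = 0.
Proof.
  induction l as [|y0 l IH]; simpl; intros H Hs y Hy; [contradiction|].
  pose proof (H y0 (or_introl eq_refl)).
  pose proof (sum_over_nonneg l g (fun z Hz => H z (or_intror Hz))).
  destruct Hy as [<-|Hy]; [lra|]. apply IH; auto; lra.
Qed.

Section GaussRadau.

Variables (a b : R) (m : nat) (zo : list R).
Hypotheses (Ha : -1 < a) (Hb : -1 < b) (Hnd : NoDup zo) (Hlen : length zo = m)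
  (Hin : forall z, In z zo -> -1 < z < 1)
  (Horth : forall g, is_poly_deg_le g (m - 1) ->
             is_Iint (fun x => prod_roots zo x * g x * wJ (a + 1) b x) 0).

Let nodes := 1 :: zo.

Definition lagrange y x :=
  prod_roots (remove Req_EM_T y nodes) x / prod_roots (remove Req_EM_T y nodes) y.

Definition radau_weight y := Iint (fun x => lagrange y x * wJ a b x).

Lemma nodes_NoDup : NoDup nodes.
Proof. constructor; auto. intro H. apply Hin in H. lra. Qed.

Lemma poly_lagrange y : In y nodes -> is_poly_deg_le (lagrange y) m.
Proof.
  intro Hy. unfold lagrange.
  apply (poly_ext _ (fun x => / prod_roots (remove Req_EM_T y nodes) y * prod_roots (remove Req_EM_T y nodes) x)).
  - intro; unfold Rdiv; ring.
  - apply poly_scal, poly_deg_mono with (length (remove Req_EM_T y nodes)); [|apply poly_prod_roots].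
    pose proof (remove_length_lt Req_EM_T nodes y Hy). unfold nodes in *. simpl in *. lia.
Qed.

Lemma lagrange_self y : lagrange y y = 1.
Proof. unfold lagrange. field. apply prod_roots_neq0, remove_In. Qed.

Lemma lagrange_other y y' : In y' nodes -> y' <> y -> lagrange y y' = 0.
Proof.
  intros H1 H2. unfold lagrange. rewrite prod_roots_eq0; [unfold Rdiv; ring|].
  apply in_in_remove; auto.
Qed.

Lemma is_Iint_lagrange y : In y nodes -> is_Iint (fun x => lagrange y x * wJ a b x) (radau_weight y).
Proof.
  intro Hy. destruct (is_Iint_poly_wJ_ex a b m (lagrange y) Ha Hb (poly_lagrange y Hy)) as [l Hl].
  unfold radau_weight. rewrite (Iint_eq _ l Hl). auto.
Qed.

(* Exactness: [F] minus its Lagrange interpolant at the nodes is [(x - 1) prod_roots zo x g(x)]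
   with [deg g < m], and [(1 - x) w_{a,b} = w_{a+1,b}]. *)
Theorem radau_quadrature F : is_poly_deg_le F (2 * m) ->
  is_Iint (fun x => F x * wJ a b x) (sum_over nodes (fun y => F y * radau_weight y)).
Proof.
  intro HF.
  set (L := fun x => sum_over nodes (fun y => F y * lagrange y x)).
  assert (HL : is_poly_deg_le L m).
  { apply (poly_sum_over m nodes (fun y x => F y * lagrange y x)). intros. apply poly_scal, poly_lagrange; auto. }
  assert (HLv : forall y0, In y0 nodes -> L y0 = F y0).
  { intros y0 Hy0. unfold L. rewrite (sum_over_delta nodes _ y0 nodes_NoDup Hy0), lagrange_self; [ring|].
    intros y Hy Hne. rewrite lagrange_other; auto. ring. }
  assert (HD : is_poly_deg_le (fun x => F x - L x) (2 * m)).
  { apply poly_sub; auto. apply poly_deg_mono with m; auto; lia. }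
  destruct (poly_factor_roots nodes _ _ HD nodes_NoDup) as [g [Hg HFg]].
  { intros r Hr. rewrite HLv; auto; ring. }
  assert (Hg' : is_poly_deg_le g (m - 1)).
  { unfold nodes in Hg. simpl in Hg. rewrite Hlen in Hg. eapply poly_deg_mono; [|exact Hg]. lia. }
  assert (H1 : is_Iint (fun x => (F x - L x) * wJ a b x) 0).
  { replace 0 with (-1 * 0) by ring.
    apply is_Iint_ext with (fun x => -1 * (prod_roots zo x * g x * wJ (a + 1) b x)).
    - intros x Hx. rewrite HFg, wJ_succ_l by auto. unfold nodes; simpl. ring.
    - apply is_Iint_scal, Horth; auto. }
  assert (H2 : is_Iint (fun x => L x * wJ a b x) (sum_over nodes (fun y => F y * radau_weight y))).
  { apply is_Iint_ext with (fun x => sum_over nodes (fun y => F y * (lagrange y x * wJ a b x))).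
    - intros x Hx. unfold L. clear. induction nodes as [|y l IH]; simpl; [ring|]. rewrite IH. ring.
    - apply (is_Iint_sum_over nodes (fun y x => F y * (lagrange y x * wJ a b x))).
      intros y Hy. apply is_Iint_scal, is_Iint_lagrange; auto. }
  rewrite <- Rplus_0_r.
  apply is_Iint_ext with (fun x => L x * wJ a b x + (F x - L x) * wJ a b x); [intros; ring|].
  apply is_Iint_plus; auto.
Qed.

(* Apply exactness to the square of a Lagrange basis polynomial. *)
Lemma radau_weight_gt0 y : In y nodes -> 0 < radau_weight y.
Proof.
  intro Hy.
  assert (HP : is_poly_deg_le (fun x => lagrange y x * lagrange y x) (2 * m)).
  { replace (2 * m)%nat with (m + m)%nat by lia. apply poly_mul; apply poly_lagrange; auto. }
  pose proof (radau_quadrature _ HP) as HQ.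
  rewrite (sum_over_delta nodes _ y nodes_NoDup Hy), lagrange_self, !Rmult_1_l in HQ.
  2: { intros y' Hy' Hne. rewrite lagrange_other; auto. ring. }
  apply (is_Iint_gt0 _ _ HQ).
  - apply continuous_inside_mult; [|apply wJ_continuous].
    apply continuous_inside_mult; eapply continuous_inside_poly; apply poly_lagrange; auto.
  - intros x Hx. pose proof (wJ_gt0 a b x). pose proof (Rle_0_sqr (lagrange y x)). unfold Rsqr in *. nra.
  - assert (Hx0 : exists x0, -1 < x0 < 1 /\ lagrange y x0 <> 0).
    { destruct Hy as [<-|Hy].
      - apply (poly_nonzero_inside m); [apply poly_lagrange; left; auto|rewrite lagrange_self; lra].
      - exists y. split; [apply Hin; auto|rewrite lagrange_self; lra]. }
    destruct Hx0 as [x0 [Hx0 Hne]]. exists x0. split; auto. pose proof (wJ_gt0 a b x0).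
    assert (0 < lagrange y x0 * lagrange y x0) by (apply Rsqr_pos_lt in Hne; auto). nra.
Qed.

Theorem radau_nonpos_forces_zero F l : is_poly_deg_le F (2 * m) ->
  (forall y, In y nodes -> 0 <= F y) -> is_Iint (fun x => F x * wJ a b x) l -> l <= 0 ->
  forall y, In y nodes -> F y = 0.
Proof.
  intros HF Hnn HI Hl y Hy.
  assert (E : l = sum_over nodes (fun y => F y * radau_weight y)).
  { rewrite <- (Iint_eq _ _ HI). apply Iint_eq, radau_quadrature; auto. }
  assert (Hz : F y * radau_weight y = 0).
  { apply (sum_over_nonpos_eq0 nodes (fun y => F y * radau_weight y)); auto; [|lra].
    intros y' Hy'. pose proof (radau_weight_gt0 y' Hy'). pose proof (Hnn y' Hy'). nra. }
  pose proof (radau_weight_gt0 y Hy). apply Rmult_integral in Hz as [Hz|Hz]; auto. lra.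
Qed.

End GaussRadau.

(** * The extremal problem *)

Lemma sign_change_near G z u : continuous G z -> G z <> 0 -> -1 < z < u ->
  exists y, -1 < y < u /\ (y - z) * G y < 0.
Proof.
  intros Hc Hnz Hz.
  destruct (continuous_eps_delta G z Hc (Rabs (G z) / 2)) as [del [Hdel K]].
  { apply Rdiv_lt_0_compat; [apply Rabs_pos_lt; auto|lra]. }
  destruct (Rlt_le_dec 0 (G z)) as [Hp|Hn].
  - set (t := Rmin del (z + 1) / 2).
    assert (0 < t) by (unfold t; apply Rdiv_lt_0_compat; [apply Rmin_pos; lra|lra]).
    assert (t < del) by (unfold t; pose proof (Rmin_l del (z + 1)); lra).
    assert (t < z + 1) by (unfold t; pose proof (Rmin_r del (z + 1)); lra).
    exists (z - t). split; [lra|].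
    assert (Ht : Rabs (z - t - z) < del) by (rewrite Rabs_left; lra).
    specialize (K (z - t) Ht). rewrite (Rabs_right (G z)) in K by lra.
    apply Rabs_def2 in K. nra.
  - assert (Hn' : G z < 0) by lra.
    set (t := Rmin del (u - z) / 2).
    assert (0 < t) by (unfold t; apply Rdiv_lt_0_compat; [apply Rmin_pos; lra|lra]).
    assert (t < del) by (unfold t; pose proof (Rmin_l del (u - z)); lra).
    assert (t < u - z) by (unfold t; pose proof (Rmin_r del (u - z)); lra).
    exists (z + t). split; [lra|].
    assert (Ht : Rabs (z + t - z) < del) by (rewrite Rabs_right; lra).
    specialize (K (z + t) Ht). rewrite (Rabs_left (G z)) in K by lra.
    apply Rabs_def2 in K. nra.
Qed.

Lemma continuous_nonneg_left_limit (f : R -> R) x1 : continuous f x1 -> -1 < x1 ->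
  (forall y, -1 <= y < x1 -> 0 <= f y) -> 0 <= f x1.
Proof.
  intros Hc Hx1 H. apply Rnot_lt_le. intro Hneg.
  destruct (continuous_eps_delta f x1 Hc (- f x1 / 2)) as [del [Hdel K]]; [lra|].
  set (t := Rmin del (x1 + 1) / 2).
  assert (0 < t) by (unfold t; apply Rdiv_lt_0_compat; [apply Rmin_pos; lra|lra]).
  assert (t < del) by (unfold t; pose proof (Rmin_l del (x1 + 1)); lra).
  assert (t <= (x1 + 1) / 2) by (unfold t; pose proof (Rmin_r del (x1 + 1)); lra).
  assert (Ht : Rabs (x1 - t - x1) < del) by (rewrite Rabs_left; lra).
  specialize (K (x1 - t) Ht). apply Rabs_def2 in K. specialize (H (x1 - t) ltac:(lra)). lra.
Qed.

Lemma r_set_glb_ex f : exists r, is_glb (r_set f) r.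
Proof.
  set (E := fun y => r_set f (- y)).
  assert (Hb : bound E) by (exists 0; intros y [[H1 H2] _]; lra).
  assert (He : exists y, E y).
  { exists (-2). unfold E, r_set. replace (- -2) with 2 by ring. split; [lra|intros; lra]. }
  destruct (completeness E Hb He) as [M [Hub Hlub]].
  exists (- M). split.
  - intros x Hx. assert (- x <= M); [|lra]. apply Hub. unfold E. rewrite Ropp_involutive; auto.
  - intros b' Hb'. assert (M <= - b'); [|lra]. apply Hlub. intros y Hy. specialize (Hb' _ Hy). lra.
Qed.

Lemma r_I_glb f : is_glb (r_set f) (r_I f).
Proof.
  unfold r_I. destruct ClassicalDescription.excluded_middle_informative as [E|E].
  - destruct (constructive_indefinite_description _ E) as [r Hr]. auto.
  - exfalso. apply E, r_set_glb_ex.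
Qed.

Lemma r_I_nonneg_below f y : -1 <= y < 1 - r_I f -> 0 <= f y.
Proof.
  intros Hy. apply NNPP. intro N. destruct (r_I_glb f) as [_ Hgl].
  assert (1 - y <= r_I f); [|lra].
  apply Hgl. intros r [_ Hr]. apply Rnot_lt_le. intro Hlt. apply N, Hr. lra.
Qed.

Lemma r_I_nonneg_upto f x1 : continuous f x1 -> -1 < x1 -> r_I f = 1 - x1 ->
  forall y, -1 <= y <= x1 -> 0 <= f y.
Proof.
  intros Hc Hx1 Heq y Hy.
  assert (Hlt : forall y, -1 <= y < x1 -> 0 <= f y) by (intros; apply r_I_nonneg_below; lra).
  destruct (Req_dec y x1) as [->|Hne]; [apply continuous_nonneg_left_limit; auto|apply Hlt; lra].
Qed.

Section Extremal.

Variables (a b : R) (m : nat) (zo : list R) (x1 : R) (f : R -> R).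
Hypotheses (Ha : -1 < a) (Hb : -1 < b) (Hm : (1 <= m)%nat)
  (Hnd : NoDup zo) (Hlen : length zo = m) (Hin : forall z, In z zo -> -1 < z < 1)
  (Horth : forall g, is_poly_deg_le g (m - 1) ->
             is_Iint (fun x => prod_roots zo x * g x * wJ (a + 1) b x) 0)
  (Hx1 : In x1 zo) (Hx1_max : forall z, In z zo -> z <= x1)
  (Hf : is_poly_deg_le f (2 * m))
  (Hint : exists I0, is_Iint (fun x => f x * wJ a b x) I0 /\ I0 <= 0)
  (Hf1 : 0 <= f 1).

(* The candidate extremal polynomial: [(x - 1) (x - x1) prod_{y <> x1} (x - y)^2]. *)
Definition extremal_poly x := (x - 1) * prod_roots zo x * prod_roots (remove Req_EM_T x1 zo) x.

Lemma factor_nodes_of_nonneg : (forall y, -1 <= y <= x1 -> 0 <= f y) ->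
  exists g, is_poly_deg_le g (m - 1) /\ forall x, f x = prod_roots (1 :: zo) x * g x.
Proof.
  intros Hpos. destruct Hint as [I0 [HI0 HI0le]].
  assert (Hv : forall y, In y (1 :: zo) -> f y = 0).
  { apply (radau_nonpos_forces_zero a b m zo Ha Hb Hnd Hlen Hin Horth f I0); auto.
    intros y [<-|Hy]; auto. apply Hpos. pose proof (Hx1_max y Hy). pose proof (Hin y Hy). lra. }
  destruct (poly_factor_roots (1 :: zo) (2 * m) f Hf) as [g [Hg Hfg]]; auto.
  { constructor; auto. intro H1. destruct (Hin 1 H1). lra. }
  exists g. split; auto. simpl in Hg. rewrite Hlen in Hg. eapply poly_deg_mono; [|exact Hg]. lia.
Qed.

(* Where [f] keeps its sign, a root of [prod_roots zo] is a double root of [f]. *)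
Lemma cofactor_root_of_nonneg g z u : (forall x, f x = prod_roots (1 :: zo) x * g x) ->
  (forall x, continuous g x) -> In z zo -> z < u ->
  (forall y, -1 <= y < u -> 0 <= f y) -> g z = 0.
Proof.
  intros Hfg Hg Hz Hzu Hpos. apply NNPP. intro Hgz.
  set (G := fun x => (x - 1) * prod_roots (remove Req_EM_T z zo) x * g x).
  assert (HG : forall x, f x = (x - z) * G x).
  { intro x. rewrite Hfg. simpl. rewrite (prod_roots_remove z zo Hnd Hz x). unfold G. ring. }
  assert (Hc : continuous G z).
  { apply (continuous_mult (fun x => (x - 1) * prod_roots (remove Req_EM_T z zo) x) g); [|apply Hg].
    apply (continuous_mult (fun x => x - 1) (prod_roots (remove Req_EM_T z zo))).
    - apply (poly_continuous 1). apply (poly_ext _ (fun x => 1 * x + -1)); [intro; ring|apply poly_affine].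
    - eapply poly_continuous. apply poly_prod_roots. }
  pose proof (Hin z Hz).
  assert (HGz : G z <> 0).
  { unfold G. apply Rmult_integral_contrapositive. split; auto.
    apply Rmult_integral_contrapositive. split; [lra|apply prod_roots_neq0, remove_In]. }
  destruct (sign_change_near G z u Hc HGz ltac:(lra)) as [y [Hy Hneg]].
  specialize (Hpos y ltac:(lra)). rewrite HG in Hpos. lra.
Qed.

Lemma r_set_lower_bound : (exists x, f x <> 0) -> forall r, r_set f r -> 1 - x1 <= r.
Proof.
  intros [x0 Hx0] r [Hr Hrpos]. apply Rnot_lt_le. intro Hlt.
  destruct factor_nodes_of_nonneg as [g [Hg Hfg]]; [intros y Hy; apply Hrpos; lra|].
  assert (Hgz : forall z, In z zo -> g z = 0).
  { intros z Hz. apply (cofactor_root_of_nonneg g z (1 - r)); auto.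
    - intro; eapply poly_continuous; eauto.
    pose proof (Hx1_max z Hz). lra. }
  apply Hx0. rewrite Hfg, (poly_eq0_of_roots zo (m - 1) g Hg Hnd Hgz ltac:(lia) x0). ring.
Qed.

Lemma extremal_poly_m1_gt0 : 0 < extremal_poly (-1).
Proof.
  unfold extremal_poly. rewrite (prod_roots_remove x1 zo Hnd Hx1).
  set (q := prod_roots (remove Req_EM_T x1 zo) (-1)).
  assert (Hq : q <> 0).
  { apply prod_roots_neq0. intro H1. apply in_remove in H1 as [H1 _]. destruct (Hin _ H1). lra. }
  pose proof (Hin x1 Hx1). assert (0 < q * q) by (apply Rsqr_pos_lt in Hq; auto).
  replace ((-1 - 1) * ((-1 - x1) * q) * q) with (2 * (1 + x1) * (q * q)) by ring.
  apply Rmult_lt_0_compat; lra.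
Qed.

Lemma extremal_poly_nonneg_left y : -1 <= y <= x1 -> 0 <= extremal_poly y.
Proof.
  intro Hy. unfold extremal_poly. rewrite (prod_roots_remove x1 zo Hnd Hx1).
  set (q := prod_roots (remove Req_EM_T x1 zo) y).
  replace ((y - 1) * ((y - x1) * q) * q) with ((1 - y) * (x1 - y) * (q * q)) by ring.
  pose proof (Hin x1 Hx1). pose proof (Rle_0_sqr q). unfold Rsqr in *.
  apply Rmult_le_pos; [apply Rmult_le_pos|]; lra.
Qed.

Lemma extremal_factor_of_nonneg : (forall y, -1 <= y <= x1 -> 0 <= f y) -> (exists x, f x <> 0) ->
  exists c, 0 < c /\ forall x, f x = c * extremal_poly x.
Proof.
  intros Hpos [x0 Hx0]. destruct (factor_nodes_of_nonneg Hpos) as [g [Hg Hfg]].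
  set (zo' := remove Req_EM_T x1 zo).
  assert (Hlen' : length zo' = (m - 1)%nat) by (pose proof (length_remove_R x1 zo Hnd Hx1); unfold zo'; lia).
  destruct (poly_factor_roots zo' (m - 1) g Hg (NoDup_remove_R x1 zo Hnd)) as [h [Hh Hgh]].
  { intros z Hz. apply in_remove in Hz as [Hz Hne].
    apply (cofactor_root_of_nonneg g z x1); auto.
    - intro; eapply poly_continuous; eauto.
    - pose proof (Hx1_max z Hz). lra.
    - intros y Hy. apply Hpos. lra. }
  rewrite Hlen', Nat.sub_diag in Hh. apply poly_deg_0_iff in Hh as [c Hc].
  assert (Hfc : forall x, f x = c * extremal_poly x).
  { intro x. rewrite Hfg, Hgh, Hc. unfold extremal_poly. fold zo'. simpl. ring. }
  exists c. split; auto.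
  (* [c <> 0] as [f <> 0], and [f (-1) >= 0] fixes the sign. *)
  pose proof extremal_poly_m1_gt0. pose proof (Hin x1 Hx1).
  pose proof (Hpos (-1) ltac:(lra)) as Hm1. rewrite Hfc in Hm1.
  destruct (Rtotal_order c 0) as [Hlt|[Heq|Hgt]]; auto.
  - assert (c * extremal_poly (-1) < 0) by (apply Rmult_neg_pos; auto). lra.
  - exfalso. apply Hx0. rewrite Hfc, Heq. ring.
Qed.

End Extremal.

Lemma is_Iint_wJ_gt0 a b : -1 < a -> -1 < b -> exists C, is_Iint (wJ a b) C /\ 0 < C.
Proof.
  intros Ha Hb. destruct (is_Iint_poly_wJ_ex a b 0 (fun _ => 1) Ha Hb (poly_const 0 1)) as [C HC].
  assert (HC' : is_Iint (wJ a b) C) by (eapply is_Iint_ext; [|exact HC]; intros; simpl; ring).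
  exists C. split; auto. apply (is_Iint_gt0 _ _ HC' (wJ_continuous a b)).
  - intros; left; apply wJ_gt0.
  - exists 0. split; [lra|apply wJ_gt0].
Qed.

Lemma jcoef_0_nonpos_integral a b d f : -1 < a -> -1 < b -> is_poly_deg_le f d ->
  jcoef a b f 0 <= 0 -> exists I0, is_Iint (fun x => f x * wJ a b x) I0 /\ I0 <= 0.
Proof.
  intros Ha Hb Hf Hj0.
  destruct (is_Iint_poly_wJ_ex a b d f Ha Hb Hf) as [I0 HI0].
  destruct (is_Iint_wJ_gt0 a b Ha Hb) as [C [HC HCpos]].
  assert (Hw : Iint (wJ a b) = C) by (apply Iint_eq; auto).
  assert (Hscal : forall g l, is_Iint (fun x => g x * wJ a b x) l ->
            Iint (fun x => g x * wprob a b x) = / C * l).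
  { intros g l Hg. apply Iint_eq. unfold wprob. rewrite Hw.
    eapply is_Iint_ext; [|apply (is_Iint_scal (/ C) _ _ Hg)]. intros; simpl; unfold Rdiv; ring. }
  assert (Hnorm : inner a b (jacobiP a b 0) (jacobiP a b 0) = 1).
  { unfold inner. rewrite (Hscal _ C); [field; lra|].
    eapply is_Iint_ext; [|exact HC]. intros. rewrite jacobiP_0. ring. }
  assert (Hp0 : forall x, jacobi_p a b 0 x = 1).
  { intro x. unfold jacobi_p. rewrite Hnorm, sqrt_1, jacobiP_0. field. }
  exists I0. split; auto.
  unfold jcoef, inner in Hj0. rewrite (Hscal _ I0) in Hj0.
  - pose proof (Rinv_0_lt_compat C HCpos). nra.
  - eapply is_Iint_ext; [|exact HI0]. intros. rewrite Hp0. ring.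
Qed.

Lemma jacobi_p_roots a b m x1 : -1 < a -> -1 < b -> (1 <= m)%nat ->
  jacobi_p (a + 1) b m x1 = 0 -> (forall y, jacobi_p (a + 1) b m y = 0 -> y <= x1) ->
  exists zo k, NoDup zo /\ length zo = m /\ (forall z, In z zo -> -1 < z < 1) /\
    (forall x, jacobi_p (a + 1) b m x = k * prod_roots zo x) /\
    (forall g, is_poly_deg_le g (m - 1) ->
       is_Iint (fun x => prod_roots zo x * g x * wJ (a + 1) b x) 0) /\
    In x1 zo /\ (forall z, In z zo -> z <= x1).
Proof.
  intros Ha Hb Hm Hx1 Hmax.
  set (c := / sqrt (inner (a + 1) b (jacobiP (a + 1) b m) (jacobiP (a + 1) b m))).
  assert (Hp : forall x, jacobi_p (a + 1) b m x = c * jacobiP (a + 1) b m x).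
  { intro. unfold jacobi_p, c, Rdiv. ring. }
  (* A zero normalisation would make every real number a zero. *)
  assert (Hc : c <> 0).
  { intro Hc0. specialize (Hmax (x1 + 1)). rewrite Hp, Hc0, Rmult_0_l in Hmax. specialize (Hmax eq_refl). lra. }
  assert (Horth : forall g, is_poly_deg_le g (m - 1) ->
            is_Iint (fun x => jacobi_p (a + 1) b m x * g x * wJ (a + 1) b x) 0).
  { intros g Hg. replace 0 with (c * 0) by ring.
    apply (is_Iint_ext (fun x => c * (jacobiP (a + 1) b m x * g x * wJ (a + 1) b x))).
    - intros; rewrite Hp; ring.
    - apply is_Iint_scal, jacobiP_orthogonal; auto; lra. }
  destruct (orthogonal_poly_factor (a + 1) b m (jacobi_p (a + 1) b m) Hm)
    as [zo [k [Hnd [Hlen [Hin [Hk Hpk]]]]]]; auto.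
  - apply (poly_ext _ (fun x => c * jacobiP (a + 1) b m x)); [intro; auto|apply poly_scal, poly_jacobiP].
  - rewrite Hp. apply Rmult_integral_contrapositive. split; auto.
    pose proof (jacobiP_1_gt0 (a + 1) b m ltac:(lra)). lra.
  - exists zo, k. do 4 (split; [auto|]). split; [|split].
    + intros g Hg. replace 0 with (/ k * 0) by ring.
      eapply is_Iint_ext; [|apply (is_Iint_scal (/ k) _ _ (Horth g Hg))].
      intros; simpl; rewrite Hpk; field; auto.
    + apply NNPP. intro N. apply (prod_roots_neq0 zo x1 N).
      rewrite Hpk in Hx1. apply Rmult_integral in Hx1 as [E|E]; [contradiction|auto].
    + intros z Hz. apply Hmax. rewrite Hpk, prod_roots_eq0; auto; ring.
Qed.

Lemma jacobi_p_extremal_poly a b m zo k x1 x : NoDup zo -> In x1 zo ->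
  (forall x, jacobi_p (a + 1) b m x = k * prod_roots zo x) -> x <> x1 ->
  (1 - x) * jacobi_p (a + 1) b m x ^ 2 / (x1 - x) = k ^ 2 * extremal_poly zo x1 x.
Proof.
  intros Hnd Hx1 Hpk Hx. unfold extremal_poly.
  rewrite Hpk, (prod_roots_remove x1 zo Hnd Hx1). field. lra.
Qed.

Theorem mainTheorem9 (s a b : R) (m : nat) (x1 : R) (f : R -> R)
  (hs : s = 1 \/ s = -1)
  (hab : b <= a) (hb : -1/2 <= b)
  (hm : (1 <= m)%nat)
  (hx1_zero : jacobi_p (a + 1) b m x1 = 0)
  (hx1_max : forall y, jacobi_p (a + 1) b m y = 0 -> y <= x1)
  (hfB : in_B s a b f)
  (hf0 : exists x, inI x /\ f x <> 0)
  (hfpoly : is_poly_deg_le f (2 * m))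
  (hf1 : s = 1 -> f 1 = 0) :
  1 - x1 <= r_I f /\
  (r_I f = 1 - x1 <->
     exists c, 0 < c /\
       forall x, x <> x1 ->
         f x = c * ((1 - x) * (jacobi_p (a + 1) b m x) ^ 2 / (x1 - x))).
Proof.
  assert (Ha : -1 < a) by lra. assert (Hb : -1 < b) by lra.
  destruct hfB as [_ [Hj0 [_ Hs1]]].
  destruct (jacobi_p_roots a b m x1 Ha Hb hm hx1_zero hx1_max)
    as [zo [k [Hnd [Hlen [Hin [Hpk [Horth [Hx1 Hmax]]]]]]]].
  assert (Hk : k <> 0).
  { intro Hk0. specialize (hx1_max (x1 + 1)). rewrite Hpk, Hk0, Rmult_0_l in hx1_max.
    specialize (hx1_max eq_refl). lra. }
  pose proof (jcoef_0_nonpos_integral a b (2 * m) f Ha Hb hfpoly Hj0) as Hint.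
  assert (Hf1 : 0 <= f 1) by (destruct hs as [-> | ->]; [rewrite hf1|]; lra).
  assert (Hf0 : exists x, f x <> 0) by (destruct hf0 as [x [_ Hx]]; eauto).
  pose proof (r_set_lower_bound a b m zo x1 f Ha Hb hm Hnd Hlen Hin Horth Hmax hfpoly Hint Hf1 Hf0)
    as Hlower.
  destruct (r_I_glb f) as [Hlb Hgl].
  pose proof (Hin x1 Hx1).
  split; [apply Hgl, Hlower|split].
  - intro Heq.
    pose proof (r_I_nonneg_upto f x1 (poly_continuous _ _ hfpoly x1) ltac:(lra) Heq) as Hpos.
    destruct (extremal_factor_of_nonneg a b m zo x1 f Ha Hb hm Hnd Hlen Hin Horth Hx1 Hmax hfpoly Hint Hf1 Hpos Hf0)
      as [c [Hc Hfc]].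
    exists (c / k ^ 2). split; [apply Rdiv_lt_0_compat; auto; apply pow2_gt_0; auto|].
    intros x Hx. rewrite (jacobi_p_extremal_poly a b m zo k x1 x), Hfc; auto. field. auto.
  - intros [c [Hc Hfc]]. apply Rle_antisym; [apply Hlb|apply Hgl, Hlower].
    split; [lra|]. intros y Hy.
    rewrite Hfc, (jacobi_p_extremal_poly a b m zo k x1 y) by (auto; lra).
    apply Rmult_le_pos; [lra|]. apply Rmult_le_pos; [apply pow2_ge_0|].
    apply extremal_poly_nonneg_left; auto; lra.
Qed.
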